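(* Let $S$ be a stable subset of a stable $L^0$-module equipped with a stable topology $\mathscr T$. The following are equivalent: (i) $S$ is stable compact; (ii) every stable ultrafilter on $S$ has a cluster point in $S$; (iii) for every stable collection $\mathscr O$ of stable open sets with $S=\bigcup\mathscr O$ there is a stable finite subcollection $\tilde{\mathscr O}\subset\mathscr O$ with $S=\bigcup\tilde{\mathscr O}$; (iv) every stable collection $\mathscr C$ of stable closed subsets of $S$ such that $\bigcap\tilde{\mathscr C}\neq\emptyset$ for every stable finite subcollection $\tilde{\mathscr C}\subset\mathscr C$ satisfies $\bigcap\mathscr C\neq\emptyset$.
   Context: $L^0$ is the ring of real measurable functions on a probability space $(\Omega,\mathcal F,\mathbb P)$ modulo a.e. equality. An $L^0$-module $E$ is stable if for every countable measurable partition $(A_k)$ of $\Omega$ and $(x_k)\subset E$ there is a unique $x=\sum_k1_{A_k}x_k$ with $1_{A_k}x=1_{A_k}x_k$ for all $k$. A nonempty $S\subset E$ is stable if it contains all such concatenations of its elements. For stable sets $Y_k$, $\sum_k1_{A_k}Y_k:=\{\sum_k1_{A_k}y_k:y_k\in Y_k\}$; a nonempty collection of stable sets is stable if it is closed under this operation. For a nonempty collection $\mathscr X$ of stable sets, $\mathrm{st}(\mathscr X)=\{\sum_j1_{B_j}U_j:U_j\in\mathscr X,(B_j)\text{ countable measurable partition}\}$; a subcollection $\tilde{\mathscr O}$ of a stable collection $\mathscr O$ is stable finite if $\tilde{\mathscr O}=\{\sum_k1_{A_k}V_k:V_k\in\mathrm{st}(\mathscr O_k)\}$ for a countable measurable partition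 $(A_k)$ and finite nonempty $\mathscr O_k\subset\mathscr O$. A topology on $S$ is stable if it has a base which is a stable collection of stable sets. A filter on $S$ is stable if it has a filter base which is a stable collection of stable sets; a stable ultrafilter is a maximal stable filter. $S$ is stable compact if every stable filter on $S$ has a cluster point in $S$. *)

From Stdlib Require Import Reals ClassicalEpsilon List.
Set Implicit Arguments.
Open Scope R_scope.

Record ProbSpace (Omega : Type) := {
  meas : (Omega -> Prop) -> Prop;
  prob : (Omega -> Prop) -> R;
  meas_full : meas (fun _ => True);
  meas_compl : forall A, meas A -> meas (fun w => ~ A w);
  meas_cunion : forall A : nat -> Omega -> Prop,
      (forall n, meas (A n)) -> meas (fun w => exists n, A n w);
  prob_nonneg : forall A, meas A -> 0 <= prob A;
  prob_full : prob (fun _ => True) = 1;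
  prob_sigma_add : forall A : nat -> Omega -> Prop,
      (forall n, meas (A n)) ->
      (forall i j w, i <> j -> A i w -> A j w -> False) ->
      infinite_sum (fun n => prob (A n)) (prob (fun w => exists n, A n w))
}.
Arguments meas {Omega} _ _.
Arguments prob {Omega} _ _.

Section L0.
Context {Omega : Type} (PS : ProbSpace Omega).

(** real measurable functions (representatives of elements of L^0) *)
Definition measurable_fun (f : Omega -> R) : Prop :=
  forall c : R, meas PS (fun w => f w < c).

Definition null_set (N : Omega -> Prop) : Prop :=
  exists M, meas PS M /\ prob PS M = 0 /\ forall w, N w -> M w.

Definition ae_eq (f g : Omega -> R) : Prop := null_set (fun w => f w <> g w).

Definition ind (A : Omega -> Prop) : Omega -> R :=
  fun w => if excluded_middle_informative (A w) then 1 else 0.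

Definition partition (A : nat -> Omega -> Prop) : Prop :=
  (forall k, meas PS (A k)) /\
  (forall i j w, i <> j -> A i w -> A j w -> False) /\
  (forall w, exists k, A k w).
End L0.

(** An L^0-module: an abelian group E with an action of (representatives of)
    L^0 satisfying the module axioms; a.e.-equal functions act identically,
    so this is exactly a module over the quotient ring L^0. *)
Record L0Module {Omega : Type} (PS : ProbSpace Omega) (E : Type) := {
  zero : E;
  add : E -> E -> E;
  opp : E -> E;
  smul : (Omega -> R) -> E -> E;
  addA : forall x y z, add x (add y z) = add (add x y) z;
  addC : forall x y, add x y = add y x;
  add0 : forall x, add zero x = x;
  addN : forall x, add (opp x) x = zero;
  smul_addr : forall f x y, measurable_fun PS f ->
      smul f (add x y) = add (smul f x) (smul f y);
  smul_addl : forall f g x, measurable_fun PS f -> measurable_fun PS g ->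
      smul (fun w => f w + g w) x = add (smul f x) (smul g x);
  smul_mul : forall f g x, measurable_fun PS f -> measurable_fun PS g ->
      smul (fun w => f w * g w) x = smul f (smul g x);
  smul_one : forall x, smul (fun _ => 1) x = x;
  smul_ae : forall f g x, measurable_fun PS f -> measurable_fun PS g ->
      ae_eq PS f g -> smul f x = smul g x
}.
Arguments smul {Omega PS E} _ _ _.

Section Stable.
Context {Omega : Type} {PS : ProbSpace Omega} {E : Type} (M : L0Module PS E).

(** x = sum_k 1_{A_k} y_k *)
Definition is_concat (A : nat -> Omega -> Prop) (y : nat -> E) (x : E) : Prop :=
  forall k, smul M (ind (A k)) x = smul M (ind (A k)) (y k).

Definition stable_module : Prop :=
  forall A, partition PS A -> forall y : nat -> E, exists! x, is_concat A y x.

Definition stable_set (Y : E -> Prop) : Prop :=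
  (exists y, Y y) /\
  forall A (y : nat -> E), partition PS A -> (forall k, Y (y k)) ->
    forall x, is_concat A y x -> Y x.

Definition concat_sets (A : nat -> Omega -> Prop) (Y : nat -> E -> Prop) : E -> Prop :=
  fun x => exists y : nat -> E, (forall k, Y k (y k)) /\ is_concat A y x.

Definition stable_coll (X : (E -> Prop) -> Prop) : Prop :=
  (exists U, X U) /\ (forall U, X U -> stable_set U) /\
  forall A (Y : nat -> E -> Prop), partition PS A -> (forall k, X (Y k)) ->
    X (concat_sets A Y).

Definition st (X : (E -> Prop) -> Prop) : (E -> Prop) -> Prop :=
  fun V => exists B (U : nat -> E -> Prop),
    partition PS B /\ (forall j, X (U j)) /\ V = concat_sets B U.

Definition stable_finite_sub (O Ot : (E -> Prop) -> Prop) : Prop :=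
  exists (A : nat -> Omega -> Prop) (Ok : nat -> list (E -> Prop)),
    partition PS A /\
    (forall k, Ok k <> nil /\ forall U, In U (Ok k) -> O U) /\
    forall V, Ot V <-> exists Vk : nat -> E -> Prop,
        (forall k, st (fun U => In U (Ok k)) (Vk k)) /\ V = concat_sets A Vk.

Definition is_topology (S : E -> Prop) (T : (E -> Prop) -> Prop) : Prop :=
  (forall U, T U -> forall x, U x -> S x) /\
  T S /\ T (fun _ => False) /\
  (forall Us : (E -> Prop) -> Prop, (forall U, Us U -> T U) ->
     T (fun x => exists U, Us U /\ U x)) /\
  (forall U V, T U -> T V -> T (fun x => U x /\ V x)).

Definition is_base (T B : (E -> Prop) -> Prop) : Prop :=
  (forall U, B U -> T U) /\
  forall U, T U -> forall x, U x -> exists V, B V /\ V x /\ forall y, V y -> U y.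

Definition stable_topology (S : E -> Prop) (T : (E -> Prop) -> Prop) : Prop :=
  is_topology S T /\ exists B, is_base T B /\ stable_coll B.

Definition closed_in (S : E -> Prop) (T : (E -> Prop) -> Prop) (C : E -> Prop) : Prop :=
  (forall x, C x -> S x) /\ T (fun x => S x /\ ~ C x).

Definition is_filter (S : E -> Prop) (F : (E -> Prop) -> Prop) : Prop :=
  F S /\
  (forall U, F U -> exists x, U x) /\
  (forall U, F U -> forall x, U x -> S x) /\
  (forall U V, F U -> F V -> F (fun x => U x /\ V x)) /\
  (forall U V, F U -> (forall x, U x -> V x) -> (forall x, V x -> S x) -> F V).

Definition filter_base (F B : (E -> Prop) -> Prop) : Prop :=
  (forall U, B U -> F U) /\
  forall U, F U -> exists V, B V /\ forall x, V x -> U x.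

Definition stable_filter (S : E -> Prop) (F : (E -> Prop) -> Prop) : Prop :=
  is_filter S F /\ exists B, filter_base F B /\ stable_coll B.

Definition stable_ultrafilter (S : E -> Prop) (F : (E -> Prop) -> Prop) : Prop :=
  stable_filter S F /\
  forall G, stable_filter S G -> (forall U, F U -> G U) -> forall U, G U -> F U.

Definition cluster_point (S : E -> Prop) (T F : (E -> Prop) -> Prop) (x : E) : Prop :=
  S x /\ forall U, T U -> U x -> forall W, F W -> exists y, U y /\ W y.

Definition stable_compact (S : E -> Prop) (T : (E -> Prop) -> Prop) : Prop :=
  forall F, stable_filter S F -> exists x, cluster_point S T F x.
End Stable.

From Pilot Require Import Defs.
From Stdlib Require Import Reals List Lra Lia Classical ClassicalEpsilon
  FunctionalExtensionality PropExtensionality Cantor.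
From mathcomp Require classical_sets boolp.
Set Implicit Arguments.
Open Scope R_scope.
(* [Reals] and [List] export their own [ind] and [partition]. *)
Notation ind := Pilot.Defs.ind.
Notation partition := Pilot.Defs.partition.

(* (ii) follows from (i) trivially, and (i) from (ii) by Zorn's lemma: every stable filter
   lies below a stable ultrafilter. (i) and (iv) are dual to each other, as in the classical
   case, once one knows that closures of stable sets and concatenations of closed stable
   sets are again stable and closed.
   The equivalence with (iii) rests on an exhaustion principle: a property of events which
   is hereditary and closed under countable disjoint unions has a largest event up to null
   sets. For (i) => (iii), exhaust the events on which finitely many members of the cover
   cover S; on the rest H, the points that no finite list meets on a non-null part of H
   form a stable filter base, and a cluster point of it lies in a member of the cover,
   which forces P(H) = 0. For (iii) => (i), exhaust the events on which the filter has a
   cluster point; on the rest H, every point has a basic neighbourhood meeting some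
   member of the filter only on null parts of H, and a stable finite subcover by such
   neighbourhoods again forces P(H) = 0. *)

Lemma set_ext {X : Type} (A B : X -> Prop) : (forall x, A x <-> B x) -> A = B.
Proof.
  intro H; apply functional_extensionality; intro x.
  apply propositional_extensionality; auto.
Qed.

(** * Exhaustion of events *)

Section Probability.
Context {Omega : Type} (PS : ProbSpace Omega).
Notation meas := (meas PS).
Notation P := (prob PS).
Implicit Types (A B G : Omega -> Prop) (D : nat -> Omega -> Prop).

Lemma meas_ext A B : meas A -> (forall w, A w <-> B w) -> meas B.
Proof. intros H E; rewrite <- (set_ext _ _ E); auto. Qed.

Lemma meas_empty : meas (fun _ => False).
Proof. apply meas_ext with (fun w => ~ True). apply meas_compl, meas_full. tauto. Qed.

Lemma meas_union A B : meas A -> meas B -> meas (fun w => A w \/ B w).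
Proof.
  intros HA HB. apply meas_ext with
    (fun w => exists n, (fun n => match n with 0 => A | _ => B end) n w).
  - apply meas_cunion. intros [|n]; auto.
  - intro w; split.
    + intros [[|n] H]; auto.
    + intros [H|H]; [exists 0%nat | exists 1%nat]; auto.
Qed.

Lemma meas_inter A B : meas A -> meas B -> meas (fun w => A w /\ B w).
Proof.
  intros HA HB. apply meas_ext with (fun w => ~ (~ A w \/ ~ B w)).
  - apply meas_compl, meas_union; apply meas_compl; auto.
  - intro w; tauto.
Qed.

Lemma meas_diff A B : meas A -> meas B -> meas (fun w => A w /\ ~ B w).
Proof. intros; apply meas_inter; auto; apply meas_compl; auto. Qed.

Lemma meas_const (p : Prop) : meas (fun _ => p).
Proof.
  destruct (classic p).
  - apply meas_ext with (fun _ => True). apply meas_full. tauto.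
  - apply meas_ext with (fun _ => False). apply meas_empty. tauto.
Qed.

Lemma meas_union_before D n :
  (forall n, meas (D n)) -> meas (fun w => exists m, (m < n)%nat /\ D m w).
Proof. intro H. apply meas_cunion. intro m. apply meas_inter; auto. apply meas_const. Qed.

Lemma infinite_sum_const_eq0 c : infinite_sum (fun _ => c) c -> c = 0.
Proof.
  intro H. destruct (Req_dec c 0) as [|Hc]; auto.
  assert (Hp : Rabs c / 2 > 0) by (apply Rabs_pos_lt in Hc; lra).
  destruct (H _ Hp) as [N HN].
  assert (H1 := HN N (le_n _)). assert (H2 := HN (S N) (le_S _ _ (le_n _))).
  unfold R_dist in *. simpl in H2.
  set (s := sum_f_R0 (fun _ : nat => c) N) in *.
  assert (Rabs (s + c - c - (s - c)) <= Rabs (s + c - c) + Rabs (s - c)).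
  { unfold Rminus at 1. eapply Rle_trans. apply Rabs_triang. rewrite Rabs_Ropp. lra. }
  replace (s + c - c - (s - c)) with c in H0 by ring. lra.
Qed.

Lemma infinite_sum_eventually (f : nat -> R) N l :
  (forall n, (n >= N)%nat -> sum_f_R0 f n = l) -> infinite_sum f l.
Proof.
  intros H eps He. exists N. intros n Hn. rewrite H; auto. unfold R_dist.
  rewrite Rminus_diag, Rabs_R0; auto.
Qed.

Lemma prob_ext A B : (forall w, A w <-> B w) -> P A = P B.
Proof. intro E; rewrite (set_ext _ _ E); auto. Qed.

Lemma prob_empty : P (fun _ => False) = 0.
Proof.
  apply infinite_sum_const_eq0.
  assert (H := prob_sigma_add PS (fun _ _ => False) (fun _ => meas_empty)). cbv beta in H.
  rewrite (prob_ext (fun w : Omega => exists _ : nat, False) (fun _ => False)) in H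
    by firstorder.
  apply H; tauto.
Qed.

Lemma prob_add A B : meas A -> meas B -> (forall w, A w -> B w -> False) ->
  P (fun w => A w \/ B w) = P A + P B.
Proof.
  intros HA HB HAB.
  set (F := fun n => match n with 0 => A | 1 => B | _ => fun _ => False end).
  assert (HF : forall n, meas (F n)) by (intros [|[|n]]; simpl; auto using meas_empty).
  rewrite (prob_ext (fun w => A w \/ B w) (fun w => exists n, F n w)).
  - eapply uniqueness_sum.
    + apply (prob_sigma_add PS F HF).
      intros [|[|i]] [|[|j]] w Hij; simpl; try tauto; try (intros; eapply HAB; eauto); lia.
    + apply infinite_sum_eventually with 1%nat. intros n Hn.
      induction n as [|n IH]; [lia|]. destruct n; [simpl; ring|].
      rewrite sum_N_predN by lia. simpl pred. rewrite IH by lia.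
      unfold F. rewrite prob_empty. ring.
  - intro w; split.
    + intros [H|H]; [exists 0%nat | exists 1%nat]; auto.
    + intros [[|[|n]] Hn]; simpl in Hn; tauto.
Qed.

Lemma prob_split A B : meas A -> meas B ->
  P A = P (fun w => A w /\ B w) + P (fun w => A w /\ ~ B w).
Proof.
  intros HA HB. rewrite <- prob_add.
  - apply prob_ext; intro w; tauto.
  - apply meas_inter; auto.
  - apply meas_diff; auto.
  - tauto.
Qed.

Lemma prob_mono A B : meas A -> meas B -> (forall w, A w -> B w) -> P A <= P B.
Proof.
  intros HA HB Hs. rewrite (prob_split B A HB HA).
  rewrite (prob_ext (fun w => B w /\ A w) A) by firstorder.
  assert (0 <= P (fun w => B w /\ ~ A w)) by (apply prob_nonneg, meas_diff; auto). lra.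
Qed.

Lemma prob_le1 A : meas A -> P A <= 1.
Proof. intro; rewrite <- (prob_full PS). apply prob_mono; auto using meas_full. Qed.

Lemma prob_sub_eq0 A B : meas A -> meas B -> (forall w, A w -> B w) -> P B = 0 -> P A = 0.
Proof.
  intros. apply Rle_antisym. rewrite <- H2. apply prob_mono; auto. apply prob_nonneg; auto.
Qed.

Lemma prob_eq0_split A B : meas A -> meas B -> P (fun w => A w /\ B w) = 0 ->
  P (fun w => A w /\ ~ B w) = 0 -> P A = 0.
Proof. intros. rewrite (prob_split A B); auto. lra. Qed.

(* Index [0] holds the complement of the union, so that [disjointify D] is a
   partition of the whole space; index [S n] holds [D n] minus the earlier [D m]. *)
Definition disjointify D : nat -> Omega -> Prop :=
  fun k => match k with
  | 0 => fun w => ~ exists n, D n w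
  | S n => fun w => D n w /\ ~ exists m, (m < n)%nat /\ D m w
  end.

Lemma disjointify_cover D w : (exists n, D n w) -> exists n, disjointify D (S n) w.
Proof.
  intros [n Hn]. induction n as [n IH] using (well_founded_induction Nat.lt_wf_0).
  destruct (classic (exists m, (m < n)%nat /\ D m w)) as [[m [h1 h2]]|h].
  - apply (IH m h1 h2).
  - exists n; simpl; auto.
Qed.

Lemma disjointify_partition D : (forall n, meas (D n)) -> partition PS (disjointify D).
Proof.
  intro HD. split; [|split].
  - intros [|n]; simpl.
    + apply meas_compl, meas_cunion; auto.
    + apply meas_diff; auto. apply meas_union_before; auto.
  - intros [|i] [|j] w Hij; simpl; try tauto.
    + intros H [h _]; apply H; eauto.
    + intros [h _] H; apply H; eauto.
    + intros [Hi Ni] [Hj Nj]. destruct (Nat.lt_total i j) as [h|[h|h]].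
      * apply Nj; eauto.
      * lia.
      * apply Ni; eauto.
  - intro w. destruct (classic (exists n, D n w)) as [Hw|Hw].
    + destruct (disjointify_cover D w Hw) as [n Hn]; eauto.
    + exists 0%nat; auto.
Qed.

Definition disjoint D := forall i j w, i <> j -> D i w -> D j w -> False.

Lemma disjointify_disjoint D n w : disjoint D -> (disjointify D (S n) w <-> D n w).
Proof.
  intro HD. simpl. split; [tauto|]. intro h; split; auto.
  intros [m [hm h2]]. apply (HD m n w); auto. lia.
Qed.

Lemma prob_cunion_eq0 D :
  (forall n, meas (D n)) -> (forall n, P (D n) = 0) -> P (fun w => exists n, D n w) = 0.
Proof.
  intros HD H0. set (Q := fun n => disjointify D (S n)).
  assert (HQ : forall n, meas (Q n)) by (intro n; apply (proj1 (disjointify_partition D HD) (S n))).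
  rewrite (prob_ext _ (fun w => exists n, Q n w)).
  - eapply uniqueness_sum.
    + apply (prob_sigma_add PS Q HQ).
      intros i j w Hij. apply (proj1 (proj2 (disjointify_partition D HD)) (S i) (S j)). lia.
    + replace (fun n => P (Q n)) with (fun _ : nat => 0).
      * apply infinite_sum_eventually with 0%nat. intros n _.
        induction n; simpl; auto. rewrite IHn; ring.
      * apply functional_extensionality; intro n. symmetry.
        apply prob_sub_eq0 with (D n); auto. intros w [h _]; auto.
  - intro w; split.
    + apply disjointify_cover.
    + intros [n [Hn _]]; eauto.
Qed.

Lemma prob_cover_eq0 A D : meas A -> (forall n, meas (D n)) ->
  (forall w, A w -> exists n, D n w) -> (forall n, P (fun w => A w /\ D n w) = 0) -> P A = 0.
Proof.
  intros HA HD Hc H0. rewrite <- (prob_cunion_eq0 (fun n w => A w /\ D n w)); auto.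
  - apply prob_ext. intro w; split.
    + intro h; destruct (Hc w h) as [n hn]; eauto.
    + intros [n [h _]]; auto.
  - intro; apply meas_inter; auto.
Qed.

(* The [D n] are chosen with [P (D n)] approaching the supremum of [P] on [Fam]. *)
Lemma union_closed_exhaustion (Fam : (Omega -> Prop) -> Prop) :
  (forall A, Fam A -> meas A) -> Fam (fun _ => False) ->
  (forall A B, Fam A -> Fam B -> Fam (fun w => A w \/ B w)) ->
  exists D, (forall n, Fam (D n)) /\
    forall G, Fam G -> P (fun w => G w /\ ~ exists n, D n w) = 0.
Proof.
  intros Hm H0 Hu.
  set (Vals := fun r => exists A, Fam A /\ r = P A).
  assert (Hb : bound Vals) by (exists 1; intros r [A [HA ->]]; apply prob_le1; auto).
  destruct (completeness Vals Hb) as [s [Hs1 Hs2]].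
  { exists (P (fun _ => False)); exists (fun _ => False); auto. }
  assert (Hn : forall n : nat, exists A, Fam A /\ P A > s - / INR (S n)).
  { intro n. apply NNPP; intro C.
    assert (Hub : is_upper_bound Vals (s - / INR (S n))).
    { intros r [A [HA ->]]. apply Rnot_lt_le. intro; apply C; exists A; split; auto. }
    specialize (Hs2 _ Hub). assert (0 < / INR (S n)) by (apply Rinv_0_lt_compat, lt_0_INR; lia).
    lra. }
  destruct (choice _ Hn) as [D HD]. exists D. split; [intro n; apply HD|].
  intros G HG. set (U := fun w => exists n, D n w).
  assert (HU : meas U) by (apply meas_cunion; intro n; apply Hm, HD).
  assert (HGm := Hm _ HG).
  assert (Hnn : 0 <= P (fun w => G w /\ ~ U w)) by (apply prob_nonneg, meas_diff; auto).
  apply Rle_antisym; auto. apply Rnot_lt_le; intro Hpos.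
  assert (Hsmall : forall n, P (fun w => G w /\ ~ U w) <= / INR (S n)).
  { intro n. destruct (HD n) as [Fn Hlt]. assert (Hmn := Hm _ Fn).
    assert (Hle : P (fun w => D n w \/ G w) <= s)
      by (apply Hs1; exists (fun w => D n w \/ G w); split; [apply Hu; auto | reflexivity]).
    assert (P (fun w => D n w \/ G w) = P (D n) + P (fun w => G w /\ ~ D n w)).
    { rewrite <- prob_add; auto.
      - apply prob_ext; intro; tauto.
      - apply meas_diff; auto.
      - tauto. }
    assert (P (fun w => G w /\ ~ U w) <= P (fun w => G w /\ ~ D n w)).
    { apply prob_mono; try apply meas_diff; auto.
      intros w [h1 h2]; split; auto. intro; apply h2; exists n; auto. }
    lra. }
  destruct (archimed_cor1 _ Hpos) as [N [HN1 HN2]]; unfold U in Hsmall.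
  specialize (Hsmall (pred N)). rewrite Nat.succ_pred_pos in Hsmall by lia. lra.
Qed.

Lemma disjoint_cunion_closed_cunion (Pp : (Omega -> Prop) -> Prop) :
  (forall A B, meas A -> meas B -> (forall w, B w -> A w) -> Pp A -> Pp B) ->
  (forall D, (forall n, meas (D n)) -> disjoint D -> (forall n, Pp (D n)) ->
     Pp (fun w => exists n, D n w)) ->
  forall D, (forall n, meas (D n)) -> (forall n, Pp (D n)) -> Pp (fun w => exists n, D n w).
Proof.
  intros Hher Hcup D HD HPD. set (Q := fun n => disjointify D (S n)).
  assert (HQ : forall n, meas (Q n)) by (intro n; apply (proj1 (disjointify_partition D HD) (S n))).
  apply Hher with (fun w => exists n, Q n w).
  - apply meas_cunion; auto.
  - apply meas_cunion; auto.
  - intros w Hw. apply disjointify_cover; auto.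
  - apply Hcup; auto.
    + intros i j w Hij. apply (proj1 (proj2 (disjointify_partition D HD)) (S i) (S j)). lia.
    + intro n. apply Hher with (D n); auto. intros w [h _]; auto.
Qed.

Lemma maximal_exhaustion (Pp : (Omega -> Prop) -> Prop) (K : Omega -> Prop) :
  meas K ->
  (forall A B, meas A -> meas B -> (forall w, B w -> A w) -> Pp A -> Pp B) ->
  Pp (fun _ => False) ->
  (forall D, (forall n, meas (D n)) -> disjoint D -> (forall n, Pp (D n)) ->
     Pp (fun w => exists n, D n w)) ->
  exists G, meas G /\ (forall w, G w -> K w) /\ Pp G /\
    forall A, meas A -> (forall w, A w -> K w /\ ~ G w) -> Pp A -> P A = 0.
Proof.
  intros HK Hher H0 Hcup.
  assert (Hdisj_cup := disjoint_cunion_closed_cunion Pp Hher Hcup).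
  set (Good := fun A => meas A /\ (forall w, A w -> K w) /\ Pp A).
  destruct (union_closed_exhaustion Good) as [D [HD Hess]].
  - intros A [h _]; auto.
  - repeat split; auto using meas_empty. tauto.
  - intros A B [h1 [h2 h3]] [g1 [g2 g3]]. repeat split.
    + apply meas_union; auto.
    + intros w [h|h]; auto.
    + apply Hher with (fun w => exists n, (fun n => match n with 0 => A | _ => B end) n w).
      * apply meas_cunion; intros [|n]; auto.
      * apply meas_union; auto.
      * intros w [h|h]; [exists 0%nat | exists 1%nat]; auto.
      * apply Hdisj_cup; intros [|n]; auto.
  - exists (fun w => exists n, D n w).
    assert (HmD : forall n, meas (D n)) by (intro n; apply HD).
    repeat split.
    + apply meas_cunion; auto.
    + intros w [n h]. apply (HD n); auto.
    + apply Hdisj_cup; auto. intro n; apply HD.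
    + intros A HA Hsub HPA. rewrite <- (Hess A).
      * apply prob_ext. intro w; split; [|tauto]. intro h; split; auto. apply Hsub; auto.
      * repeat split; auto. intros w h; apply Hsub; auto.
Qed.
End Probability.

Lemma zorn_premaximal (X : Type) (R : X -> X -> Prop) (Pm : X -> Prop) (x0 : X) :
  Pm x0 -> (forall x, R x x) -> (forall x y z, R x y -> R y z -> R x z) ->
  (forall C : X -> Prop, (forall x, C x -> Pm x) ->
     (forall x y, C x -> C y -> R x y \/ R y x) ->
     exists u, Pm u /\ forall x, C x -> R x u) ->
  exists m, Pm m /\ forall y, Pm y -> R m y -> R y m.
Proof.
  intros Hx0 Hrefl Htrans Hchain.
  set (R' := fun a b : {x | Pm x} => boolp.asbool (R (proj1_sig a) (proj1_sig b))).
  assert (HR' : forall a b, R' a b = true <-> R (proj1_sig a) (proj1_sig b))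
    by (intros a b; symmetry; apply Bool.reflect_iff, boolp.asboolP).
  destruct (@classical_sets.ZL_preorder _ (exist _ x0 Hx0) R') as [[m Hm] Hmax].
  - intro t. apply HR', Hrefl.
  - intros r s t Hrs Hst. apply HR'. apply HR' in Hrs, Hst. eauto.
  - intros A HA.
    destruct (Hchain (fun x => exists h : Pm x, A (exist _ x h))) as [u [Hu Hub]].
    + intros x [h _]; auto.
    + intros x y [hx Ax] [hy Ay].
      destruct (HA _ _ Ax Ay) as [H|H]; [left | right]; apply HR' in H; auto.
    + exists (exist _ u Hu). intros [s hs] As. apply HR'. apply Hub. exists hs; auto.
  - exists m. split; auto. intros y Hy Hmy.
    apply (HR' (exist _ y Hy) (exist _ m Hm)), Hmax, HR'; auto.
Qed.

(** * Concatenation in a stable module *)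

Section StableModule.
Context {Omega : Type} {PS : ProbSpace Omega} {E : Type} (M : L0Module PS E).
Hypothesis HE : stable_module M.
Notation meas := (@Pilot.Defs.meas Omega PS).
Notation P := (prob PS).
Notation smul := (smul M).
Notation partition := (Pilot.Defs.partition PS).
Notation concat := (concat_sets M).
Implicit Types (A B : Omega -> Prop) (D Q : nat -> Omega -> Prop) (U V W : E -> Prop).

Lemma measurable_fun_const c : measurable_fun PS (fun _ => c).
Proof. intro d. apply meas_const. Qed.

Lemma measurable_fun_ind A : meas A -> measurable_fun PS (ind A).
Proof.
  intros HA c. unfold ind.
  destruct (Rle_lt_dec c 0); [|destruct (Rle_lt_dec c 1)].
  - apply meas_ext with (fun _ => False). apply meas_empty.
    intro w; destruct (excluded_middle_informative (A w)); split; try tauto; lra.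
  - apply meas_ext with (fun w => ~ A w). apply meas_compl; auto.
    intro w; destruct (excluded_middle_informative (A w)); split; try tauto; lra.
  - apply meas_ext with (fun _ => True). apply meas_full.
    intro w; destruct (excluded_middle_informative (A w)); split; try tauto; lra.
Qed.

Lemma smul_zero x : smul (fun _ => 0) x = zero M.
Proof.
  set (z := smul (fun _ => 0) x).
  assert (Hz : add M z z = z).
  { unfold z. rewrite <- (smul_addl M); try apply measurable_fun_const.
    f_equal. apply functional_extensionality; intro; ring. }
  rewrite <- (add0 M z), <- (addN M z) at 1. rewrite <- (addA M), Hz. apply addN.
Qed.

Lemma ind_ext A B : (forall w, A w <-> B w) -> ind A = ind B.
Proof. intro H; rewrite (set_ext _ _ H); auto. Qed.

Lemma smul_indI A B x : meas A -> meas B ->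
  smul (ind A) (smul (ind B) x) = smul (ind (fun w => A w /\ B w)) x.
Proof.
  intros HA HB. rewrite <- (smul_mul M); try apply measurable_fun_ind; auto.
  f_equal. apply functional_extensionality; intro w. unfold ind.
  destruct (excluded_middle_informative (A w)), (excluded_middle_informative (B w)),
    (excluded_middle_informative (A w /\ B w)); try tauto; ring.
Qed.

Definition eqon A (x y : E) := smul (ind A) x = smul (ind A) y.

Lemma eqon_refl A x : eqon A x x.
Proof. reflexivity. Qed.

Lemma eqon_sym A x y : eqon A x y -> eqon A y x.
Proof. unfold eqon; auto. Qed.

Lemma eqon_trans A x y z : eqon A x y -> eqon A y z -> eqon A x z.
Proof. unfold eqon; intros; congruence. Qed.

Lemma eqon_ext A B x y : (forall w, A w <-> B w) -> eqon A x y -> eqon B x y.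
Proof. intros H; rewrite (set_ext _ _ H); auto. Qed.

Lemma eqon_sub A B x y : meas A -> meas B -> (forall w, B w -> A w) -> eqon A x y -> eqon B x y.
Proof.
  intros HA HB Hs H. unfold eqon in *.
  rewrite (ind_ext B (fun w => B w /\ A w)) by firstorder.
  rewrite <- !smul_indI, H; auto.
Qed.

Lemma eqon_interl A B x y : meas A -> meas B -> eqon A x y -> eqon (fun w => A w /\ B w) x y.
Proof. intros HA HB. apply eqon_sub; auto. apply meas_inter; auto. tauto. Qed.

Lemma eqon_interr A B x y : meas A -> meas B -> eqon B x y -> eqon (fun w => A w /\ B w) x y.
Proof. intros HA HB. apply eqon_sub; auto. apply meas_inter; auto. tauto. Qed.

Lemma eqon_True x y : eqon (fun _ => True) x y -> x = y.
Proof.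
  unfold eqon. replace (ind (fun _ : Omega => True)) with (fun _ : Omega => 1).
  - rewrite !(smul_one M); auto.
  - apply functional_extensionality; intro w; unfold ind.
    destruct (excluded_middle_informative True); tauto.
Qed.

Lemma eqon_null A x y : meas A -> P A = 0 -> eqon A x y.
Proof.
  intros HA H0. unfold eqon.
  assert (Hae : ae_eq PS (ind A) (fun _ => 0)).
  { exists A; repeat split; auto. intros w Hw; unfold ind in Hw.
    destruct (excluded_middle_informative (A w)); auto; lra. }
  rewrite (@smul_ae _ _ _ M (ind A) (fun _ => 0) x), (@smul_ae _ _ _ M (ind A) (fun _ => 0) y);
    try apply measurable_fun_ind; try apply measurable_fun_const; auto.
  rewrite !smul_zero; auto.
Qed.

Lemma eqon_empty x y : eqon (fun _ => False) x y.
Proof. apply eqon_null. apply meas_empty. apply prob_empty. Qed.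

Lemma partition_meas D : partition D -> forall k, meas (D k).
Proof. intros [H _]; auto. Qed.

Lemma eq_of_eqon_partition D x y : partition D -> (forall k, eqon (D k) x y) -> x = y.
Proof.
  intros HD H. destruct (@HE D HD (fun _ => x)) as [z [Hz Hu]].
  transitivity z; [symmetry|]; apply Hu; intro k; [reflexivity | symmetry; apply H].
Qed.

Lemma concat_exists D (y : nat -> E) : partition D -> exists x, is_concat M D y x.
Proof. intro HD. destruct (@HE D HD y) as [x [Hx _]]; eauto. Qed.

Lemma eqon_cunion D x y :
  (forall n, meas (D n)) -> (forall n, eqon (D n) x y) -> eqon (fun w => exists n, D n w) x y.
Proof.
  intros HD H. set (B := fun w => exists n, D n w).
  assert (HB : meas B) by (apply meas_cunion; auto).
  assert (HQ := disjointify_partition PS D HD).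
  unfold eqon. apply (eq_of_eqon_partition HQ). intros [|n]; unfold eqon;
    rewrite !smul_indI; auto; try apply (partition_meas HQ).
  - rewrite (ind_ext _ (fun _ => False)) by (simpl; firstorder).
    apply eqon_empty.
  - rewrite (ind_ext (fun w => disjointify D (S n) w /\ B w) (disjointify D (S n))).
    + apply eqon_sub with (D n); auto. apply (partition_meas HQ (S n)). simpl; tauto.
    + intro w; split; [tauto|]. intros [h1 h2]; split; [split|exists n]; auto.
Qed.

Lemma eqon_union A B x y : meas A -> meas B ->
  eqon A x y -> eqon B x y -> eqon (fun w => A w \/ B w) x y.
Proof.
  intros HA HB H1 H2.
  apply eqon_ext with (fun w => exists n, (fun n => match n with 0 => A | _ => B end) n w).
  - intro w; split.
    + intros [[|n] h]; auto.
    + intros [h|h]; [exists 0%nat | exists 1%nat]; auto.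
  - apply eqon_cunion; intros [|n]; auto.
Qed.

Lemma eqon_conull A x y : meas A -> P (fun w => ~ A w) = 0 -> eqon A x y -> x = y.
Proof.
  intros HA H0 H. apply eqon_True. apply eqon_ext with (fun w => A w \/ ~ A w).
  - intro w; split; auto; tauto.
  - apply eqon_union; auto; apply meas_compl in HA; auto. apply eqon_null; auto.
Qed.

Lemma eqon_split A B x y : meas A -> meas B -> P (fun w => A w /\ ~ B w) = 0 ->
  eqon B x y -> eqon A x y.
Proof.
  intros HA HB H0 H. apply eqon_sub with (fun w => B w \/ (A w /\ ~ B w)).
  - apply meas_union; auto. apply meas_diff; auto.
  - auto.
  - intros w Hw. destruct (classic (B w)); auto.
  - apply eqon_union; auto; [apply meas_diff; auto|]. apply eqon_null; auto. apply meas_diff; auto.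
Qed.

Definition partition2 A : nat -> Omega -> Prop :=
  fun k => match k with 0 => A | 1 => fun w => ~ A w | _ => fun _ => False end.

Lemma partition2_partition A : meas A -> partition (partition2 A).
Proof.
  intro HA. split; [|split].
  - intros [|[|k]]; simpl; auto using meas_compl, meas_empty.
  - intros [|[|i]] [|[|j]] w Hij; simpl; try tauto; lia.
  - intro w. destruct (classic (A w)); [exists 0%nat | exists 1%nat]; auto.
Qed.

Definition trivial_partition : nat -> Omega -> Prop := partition2 (fun _ => True).

Lemma trivial_partition_partition : partition trivial_partition.
Proof. apply partition2_partition, meas_full. Qed.

(** The common refinement of [D] and of the partitions [Q j] of its pieces, indexed
    through the Cantor pairing [of_nat : nat -> nat * nat]. *)
Definition refine D (Q : nat -> nat -> Omega -> Prop) : nat -> Omega -> Prop :=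
  fun n w => D (fst (of_nat n)) w /\ Q (fst (of_nat n)) (snd (of_nat n)) w.

Lemma refine_partition D (Q : nat -> nat -> Omega -> Prop) :
  partition D -> (forall k, partition (Q k)) -> partition (refine D Q).
Proof.
  intros [HD1 [HD2 HD3]] HQ. split; [|split].
  - intro n; apply meas_inter; auto. apply HQ.
  - intros i j w Hij [Hi1 Hi2] [Hj1 Hj2].
    destruct (Nat.eq_dec (fst (of_nat i)) (fst (of_nat j))) as [e|e].
    + rewrite e in Hi2. destruct (Nat.eq_dec (snd (of_nat i)) (snd (of_nat j))) as [e2|e2].
      * apply Hij. rewrite <- (cancel_to_of i), <- (cancel_to_of j).
        f_equal. destruct (of_nat i), (of_nat j); simpl in *; congruence.
      * destruct (HQ (fst (of_nat j))) as [_ [Hdis _]]. eapply Hdis; eauto.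
    + eapply HD2; eauto.
  - intro w. destruct (HD3 w) as [k Hk]. destruct (HQ k) as [_ [_ Hcov]].
    destruct (Hcov w) as [j Hj].
    exists (to_nat (k, j)). unfold refine. rewrite cancel_of_to; simpl; auto.
Qed.

Lemma glue2 A x y : meas A -> exists z, eqon A z x /\ eqon (fun w => ~ A w) z y.
Proof.
  intro HA.
  destruct (concat_exists (fun k => match k with 0 => x | _ => y end) (partition2_partition A HA))
    as [z Hz].
  exists z; split; [apply (Hz 0%nat) | apply (Hz 1%nat)].
Qed.

Lemma eqon_partition_pieces D Q k x y : partition D -> partition Q ->
  (forall j, eqon (fun w => D k w /\ Q j w) x y) -> eqon (D k) x y.
Proof.
  intros HD HQ H.
  apply eqon_ext with (fun w => exists j, D k w /\ Q j w).
  - intro w; split; [intros [j [h _]]; auto|]. intro h.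
    destruct (proj2 (proj2 HQ) w) as [j Hj]; eauto.
  - apply eqon_cunion; auto. intro j; apply meas_inter; apply partition_meas; auto.
Qed.

Lemma concat_iff D (Y : nat -> E -> Prop) x :
  concat D Y x <-> forall k, exists y, Y k y /\ eqon (D k) x y.
Proof.
  split.
  - intros [y [H1 H2]] k. exists (y k); split; auto. apply H2.
  - intro H. destruct (choice _ H) as [y Hy]. exists y; split; intro k; apply Hy.
Qed.

Lemma stable_glue U D x : stable_set M U -> partition D ->
  (forall k, exists y, U y /\ eqon (D k) x y) -> U x.
Proof.
  intros [_ HU] HD H. destruct (choice _ H) as [y Hy].
  apply (HU D y HD); intro k; apply Hy.
Qed.

Lemma stable_glue2 U A x y z : meas A -> stable_set M U ->
  U x -> U y -> eqon A z x -> eqon (fun w => ~ A w) z y -> U z.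
Proof.
  intros HA HU Hx Hy H1 H2. apply stable_glue with (partition2 A); auto.
  - apply partition2_partition; auto.
  - intros [|[|k]]; simpl; eauto. exists x; split; auto. apply eqon_empty.
Qed.

Lemma stable_ne U : stable_set M U -> exists x, U x.
Proof. intros [h _]; auto. Qed.

Lemma stable_setI U V : stable_set M U -> stable_set M V -> (exists x, U x /\ V x) ->
  stable_set M (fun x => U x /\ V x).
Proof.
  intros HU HV Hne. split; auto. intros D y HD Hy x Hx. split.
  - apply (proj2 HU) with D y; auto. intro; apply Hy.
  - apply (proj2 HV) with D y; auto. intro; apply Hy.
Qed.

Lemma concat_mono D (Y Y' : nat -> E -> Prop) :
  (forall k x, Y k x -> Y' k x) -> forall x, concat D Y x -> concat D Y' x.
Proof. intros H x [y [h1 h2]]. exists y; split; auto. Qed.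

Lemma concat_stable D (Y : nat -> E -> Prop) : partition D ->
  (forall k, stable_set M (Y k)) -> stable_set M (concat D Y).
Proof.
  intros HD HY. split.
  - destruct (choice _ (fun k => stable_ne (HY k))) as [y Hy].
    destruct (concat_exists y HD) as [x Hx]. exists x, y; auto.
  - intros Q z HQ Hz x Hx. apply concat_iff. intro k.
    assert (H1 : forall j, exists y, Y k y /\ eqon (D k) (z j) y)
      by (intro j; apply (proj1 (concat_iff D Y (z j)) (Hz j))).
    destruct (choice _ H1) as [yk Hyk].
    destruct (concat_exists yk HQ) as [y Hy].
    exists y. split.
    + apply stable_glue with Q; auto. intro j; exists (yk j); split; [apply Hyk | apply Hy].
    + apply eqon_partition_pieces with Q; auto. intro j.
      apply eqon_trans with (z j); [apply eqon_interr; try apply partition_meas; auto; apply Hx|].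
      apply eqon_trans with (yk j); [apply eqon_interl; try apply partition_meas; auto; apply Hyk|].
      apply eqon_sym, eqon_interr; try apply partition_meas; auto. apply Hy.
Qed.

Lemma concat_const D U : partition D -> stable_set M U -> concat D (fun _ => U) = U.
Proof.
  intros HD HU. apply set_ext; intro x; split.
  - intro H. apply stable_glue with D; auto. apply (proj1 (concat_iff _ _ _) H).
  - intro H. exists (fun _ => x); split; auto. intro; reflexivity.
Qed.

Lemma concat_sub D (Y : nat -> E -> Prop) S : partition D -> stable_set M S ->
  (forall k x, Y k x -> S x) -> forall x, concat D Y x -> S x.
Proof.
  intros HD HS HY x Hx. apply stable_glue with D; auto.
  intro k. destruct (proj1 (concat_iff _ _ _) Hx k) as [y [h1 h2]]. eauto.
Qed.

Lemma concat_refine_sub D' D (f : nat -> nat) (Z Y : nat -> E -> Prop) :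
  partition D' -> partition D -> (forall n w, D' n w -> D (f n) w) ->
  (forall k, stable_set M (Y k)) -> (forall n x, Z n x -> Y (f n) x) ->
  forall x, concat D' Z x -> concat D Y x.
Proof.
  intros HD' HD Hf HY HZ x Hx. apply concat_iff. intro k.
  destruct (stable_ne (HY k)) as [y0 Hy0].
  assert (Hz : forall n, exists z, (f n = k -> Y k z) /\ eqon (D' n) x z).
  { intro n. destruct (proj1 (concat_iff D' Z x) Hx n) as [z [Hz Hxz]].
    exists z. split; auto. intros <-. apply HZ; auto. }
  destruct (choice _ Hz) as [z Hzz].
  destruct (concat_exists (fun n => if Nat.eq_dec (f n) k then z n else y0) HD') as [y Hy].
  exists y. split.
  - apply stable_glue with D'; auto. intro n. specialize (Hy n); simpl in Hy.
    destruct (Nat.eq_dec (f n) k) as [e|e]; eexists; split; [apply Hzz; auto | apply Hy | | apply Hy];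
      auto.
  - apply eqon_partition_pieces with D'; auto. intro n.
    specialize (Hy n); simpl in Hy. assert (HD'n := partition_meas HD' n).
    destruct (Nat.eq_dec (f n) k) as [e|e].
    + apply eqon_interr; try apply partition_meas; auto.
      apply eqon_trans with (z n); [apply Hzz | apply eqon_sym, Hy].
    + apply eqon_ext with (fun _ => False); [|apply eqon_empty].
      intro w; split; [tauto|]. intros [Hk Hn]. apply e.
      destruct (Nat.eq_dec (f n) k); auto. exfalso; eapply (proj1 (proj2 HD)); eauto.
Qed.

Lemma concat_concat D (Q : nat -> nat -> Omega -> Prop) (Y : nat -> nat -> E -> Prop) :
  partition D -> (forall j, partition (Q j)) ->
  concat D (fun j => concat (Q j) (Y j)) =
  concat (refine D Q) (fun n => Y (fst (of_nat n)) (snd (of_nat n))).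
Proof.
  intros HD HQ. assert (HR := refine_partition Q HD HQ).
  apply set_ext; intro x; split.
  - intro H. apply concat_iff. intro n. unfold refine.
    destruct (proj1 (concat_iff _ _ _) H (fst (of_nat n))) as [c [Hc1 Hc2]].
    destruct (proj1 (concat_iff _ _ _) Hc1 (snd (of_nat n))) as [y [Hy1 Hy2]].
    exists y; split; auto. apply eqon_trans with c.
    + apply eqon_interl; auto; apply partition_meas; auto.
    + apply eqon_interr; auto; apply partition_meas; auto.
  - intro H. apply concat_iff. intro j.
    assert (H1 : forall k, exists y, Y j k y /\ eqon (refine D Q (to_nat (j,k))) x y).
    { intro k. destruct (proj1 (concat_iff _ _ _) H (to_nat (j,k))) as [y Hy].
      rewrite cancel_of_to in Hy. simpl in Hy. eauto. }
    destruct (choice _ H1) as [y Hy].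
    destruct (concat_exists y (HQ j)) as [c Hc].
    exists c. split; [exists y; split; auto; intro k; apply Hy|].
    apply eqon_partition_pieces with (Q j); auto. intro k.
    apply eqon_trans with (y k).
    + apply eqon_ext with (refine D Q (to_nat (j, k))); [|apply Hy].
      unfold refine; rewrite cancel_of_to; simpl; tauto.
    + apply eqon_sym, eqon_interr; try apply partition_meas; auto. apply Hc.
Qed.

Lemma glue_disjoint D (y : nat -> E) (y0 : E) : (forall n, meas (D n)) -> disjoint D ->
  exists z, (forall n, eqon (D n) z (y n)) /\
    forall Y, stable_set M Y -> Y y0 -> (forall n, Y (y n)) -> Y z.
Proof.
  intros HD Hdis. assert (HQ := disjointify_partition PS D HD).
  destruct (concat_exists (fun k => match k with 0 => y0 | S n => y n end) HQ) as [z Hz].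
  exists z. split.
  - intro n. apply eqon_ext with (disjointify D (S n)); [intro w; apply disjointify_disjoint; auto|].
    apply (Hz (S n)).
  - intros Y HY Hy0 Hy. apply stable_glue with (disjointify D); auto.
    intros [|n]; eexists; split; [| apply Hz | | apply Hz]; auto.
Qed.

(** * Stable hulls and stable filters *)

Lemma st_mono (X X' : (E -> Prop) -> Prop) V :
  (forall U, X U -> X' U) -> st M X V -> st M X' V.
Proof. intros H [D [U [h1 [h2 h3]]]]. exists D, U; auto. Qed.

Lemma st_self (X : (E -> Prop) -> Prop) U : X U -> stable_set M U -> st M X U.
Proof.
  intros H1 H2. exists trivial_partition, (fun _ => U).
  split; [apply trivial_partition_partition | split; auto].
  symmetry; apply concat_const; auto. apply trivial_partition_partition.
Qed.

Lemma st_stable (X : (E -> Prop) -> Prop) V :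
  (forall U, X U -> stable_set M U) -> st M X V -> stable_set M V.
Proof. intros H [D [U [h1 [h2 ->]]]]. apply concat_stable; auto. Qed.

Lemma st_concat (X : (E -> Prop) -> Prop) D (V : nat -> E -> Prop) :
  partition D -> (forall j, st M X (V j)) -> st M X (concat D V).
Proof.
  intros HD HV.
  destruct (choice _ HV) as [Q HQ]. destruct (choice _ HQ) as [U HU].
  assert (EV : V = fun j => concat (Q j) (U j))
    by (apply functional_extensionality; intro j; apply HU).
  rewrite EV, concat_concat; auto; [|intro j; apply HU].
  do 2 eexists; split; [|split; [|reflexivity]].
  - apply refine_partition; auto. intro j; apply HU.
  - intro n. apply HU.
Qed.

Definition disjoint_concat D (Y0 : E -> Prop) (Yn : nat -> E -> Prop) : E -> Prop :=
  concat (disjointify D) (fun k => match k with 0 => Y0 | S n => Yn n end).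

Section DisjointConcat.
Variables (D : nat -> Omega -> Prop) (Y0 : E -> Prop) (Yn : nat -> E -> Prop).
Hypotheses (HD : forall n, meas (D n)) (Hdis : disjoint D).

Lemma disjoint_concat_glue y0 (y : nat -> E) : Y0 y0 -> (forall n, Yn n (y n)) ->
  exists z, disjoint_concat D Y0 Yn z /\ forall n, eqon (D n) z (y n).
Proof.
  intros Hy0 Hy. assert (HQ := disjointify_partition PS D HD).
  set (yk := fun k => match k with 0 => y0 | S n => y n end).
  destruct (concat_exists yk HQ) as [z Hz].
  exists z. split; [exists yk; split; [intros [|n]|]; auto|].
  intro n. apply eqon_ext with (disjointify D (S n)); [intro w; apply disjointify_disjoint; auto|].
  apply (Hz (S n)).
Qed.

Lemma disjoint_concat_coll (X : (E -> Prop) -> Prop) : stable_coll M X -> X Y0 ->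
  (forall n, X (Yn n)) -> X (disjoint_concat D Y0 Yn).
Proof.
  intros HX H0 Hn. apply HX; [apply disjointify_partition; auto | intros [|n]; auto].
Qed.

Lemma st_disjoint_concat (X : (E -> Prop) -> Prop) : st M X Y0 ->
  (forall n, st M X (Yn n)) -> st M X (disjoint_concat D Y0 Yn).
Proof.
  intros H0 Hn. apply st_concat; [apply disjointify_partition; auto | intros [|n]; auto].
Qed.
End DisjointConcat.

Section GeneratedFilter.
Variable S : E -> Prop.

Definition gen_filter (Base : (E -> Prop) -> Prop) : (E -> Prop) -> Prop :=
  fun U => (forall x, U x -> S x) /\ exists V, Base V /\ forall x, V x -> U x.

Lemma gen_filter_stable Base : stable_coll M Base ->
  (forall V, Base V -> forall x, V x -> S x) ->
  (forall V1 V2, Base V1 -> Base V2 -> exists V3, Base V3 /\ forall x, V3 x -> V1 x /\ V2 x) ->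
  stable_filter M S (gen_filter Base).
Proof.
  intros HB Hsub Hdir. split; [split; [|split; [|split; [|split]]]|].
  - destruct HB as [[V0 H0] _]. split; auto. exists V0; split; auto. apply Hsub; auto.
  - intros U [_ [V [HV HVU]]]. destruct (stable_ne (proj1 (proj2 HB) V HV)) as [x Hx]; eauto.
  - intros U [h _]; auto.
  - intros U1 U2 [h1 [V1 [B1 S1]]] [h2 [V2 [B2 S2]]]. split; [intros x [hx _]; auto|].
    destruct (Hdir V1 V2 B1 B2) as [V3 [B3 S3]]. exists V3; split; auto.
    intros x hx; destruct (S3 x hx); auto.
  - intros U V [h [V' [B' S']]] HUV HVS. split; auto. exists V'; split; auto.
  - exists Base. split; [split|]; auto.
    + intros V HV. split; [apply Hsub; auto | exists V; auto].
    + intros U [_ [V [HV HVU]]]; eauto.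
Qed.

Variable Fam : (E -> Prop) -> Prop.
Hypothesis Fam_ex : exists U, Fam U.
Hypothesis Fam_stable : forall U, Fam U -> stable_set M U.
Hypothesis Fam_sub : forall U x, Fam U -> U x -> S x.
Hypothesis Fam_inter : forall U V, Fam U -> Fam V -> Fam (fun x => U x /\ V x).
Hypothesis HS : stable_set M S.

Lemma st_stable_coll : stable_coll M (st M Fam).
Proof.
  split; [|split].
  - destruct Fam_ex as [U HU]. exists U. apply st_self; auto.
  - intros V HV. apply st_stable with Fam; auto.
  - intros D Y HD HY. apply st_concat; auto.
Qed.

Lemma st_directed V1 V2 : st M Fam V1 -> st M Fam V2 ->
  exists V3, st M Fam V3 /\ forall x, V3 x -> V1 x /\ V2 x.
Proof.
  intros [D1 [W1 [HD1 [HW1 ->]]]] [D2 [W2 [HD2 [HW2 ->]]]].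
  set (D := refine D1 (fun _ => D2)).
  assert (HD : partition D) by (apply refine_partition; auto).
  exists (concat D (fun n x => W1 (fst (of_nat n)) x /\ W2 (snd (of_nat n)) x)). split.
  - exists D, (fun n x => W1 (fst (of_nat n)) x /\ W2 (snd (of_nat n)) x).
    split; [auto | split; [intro n; apply Fam_inter; auto | reflexivity]].
  - intros x Hx. split.
    + apply concat_refine_sub with D (fun n => fst (of_nat n))
        (fun n x => W1 (fst (of_nat n)) x /\ W2 (snd (of_nat n)) x); auto.
      * intros n w [h _]; auto.
      * intros n y [h _]; auto.
    + apply concat_refine_sub with D (fun n => snd (of_nat n))
        (fun n x => W1 (fst (of_nat n)) x /\ W2 (snd (of_nat n)) x); auto.
      * intros n w [_ h]; auto.
      * intros n y [_ h]; auto.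
Qed.

Lemma st_filter : stable_filter M S (gen_filter (st M Fam)).
Proof.
  apply gen_filter_stable.
  - apply st_stable_coll.
  - intros V [D [W [HD [HW ->]]]]. apply concat_sub; auto. intros k y; apply Fam_sub; auto.
  - apply st_directed.
Qed.

Lemma st_filter_mem U : Fam U -> gen_filter (st M Fam) U.
Proof.
  intro HU. split; [intros; eapply Fam_sub; eauto|].
  exists U. split; auto. apply st_self; auto.
Qed.
End GeneratedFilter.

Section Ultrafilter.
Variable S : E -> Prop.
Hypothesis HS : stable_set M S.

Definition finer (G1 G2 : (E -> Prop) -> Prop) := forall U, G1 U -> G2 U.

Section ChainBound.
Variables (F : (E -> Prop) -> Prop) (Ch : ((E -> Prop) -> Prop) -> Prop).
Hypothesis HF : stable_filter M S F.
Hypothesis HCh : forall G, Ch G -> stable_filter M S G /\ finer F G.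
Hypothesis HCh_chain : forall G1 G2, Ch G1 -> Ch G2 -> finer G1 G2 \/ finer G2 G1.

Definition chain_family U := stable_set M U /\ exists G, (G = F \/ Ch G) /\ G U.

Lemma chain_member_filter G : G = F \/ Ch G -> stable_filter M S G.
Proof. intros [->|h]; auto. apply HCh; auto. Qed.

Lemma chain_family_common U1 U2 : chain_family U1 -> chain_family U2 ->
  exists G, (G = F \/ Ch G) /\ G U1 /\ G U2.
Proof.
  intros [_ [G1 [HG1 h1]]] [_ [G2 [HG2 h2]]].
  destruct HG1 as [->|C1], HG2 as [->|C2].
  - exists F; auto.
  - exists G2. split; auto. split; auto. apply (proj2 (HCh C2)); auto.
  - exists G1. split; auto. split; auto. apply (proj2 (HCh C1)); auto.
  - destruct (HCh_chain C1 C2) as [h|h]; [exists G2 | exists G1]; auto.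
Qed.

Lemma chain_family_sub U x : chain_family U -> U x -> S x.
Proof.
  intros [_ [G [HG HU]]]. apply (proj1 (proj2 (proj2 (proj1 (chain_member_filter HG))))); auto.
Qed.

Lemma chain_family_inter U1 U2 : chain_family U1 -> chain_family U2 ->
  chain_family (fun x => U1 x /\ U2 x).
Proof.
  intros H1 H2. destruct (chain_family_common H1 H2) as [G [HGo [G1 G2]]].
  destruct (chain_member_filter HGo) as [HG _].
  assert (HGi : G (fun x => U1 x /\ U2 x)) by (apply HG; auto).
  split; [|exists G; auto].
  apply stable_setI; [apply H1 | apply H2 | apply HG; auto].
Qed.

Lemma chain_upper_bound : exists u, (stable_filter M S u /\ finer F u) /\
  forall G, Ch G -> finer G u.
Proof.
  assert (Hin : forall G, G = F \/ Ch G -> finer G (gen_filter S (st M chain_family))).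
  { intros G HGo U HU. destruct (chain_member_filter HGo) as [HG [B [HB HB_stable]]].
    destruct (proj2 HB U HU) as [b [Hb Hbu]].
    split; [intros; eapply (proj1 (proj2 (proj2 HG))); eauto|].
    exists b. split; auto. apply st_self; [|apply HB_stable; auto].
    split; [apply HB_stable; auto | exists G; split; auto; apply HB; auto]. }
  exists (gen_filter S (st M chain_family)). split; [split|]; auto.
  apply st_filter; auto.
  - exists S. split; auto. exists F. split; auto. apply HF.
  - intros U HU; apply HU.
  - apply chain_family_sub.
  - apply chain_family_inter.
Qed.
End ChainBound.

Lemma stable_ultrafilter_above F : stable_filter M S F ->
  exists G, stable_ultrafilter M S G /\ finer F G.
Proof.
  intro HF.
  destruct (@zorn_premaximal _ finer (fun G => stable_filter M S G /\ finer F G) F)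
    as [G [[HG HFG] Hmax]].
  - split; auto. intros U; auto.
  - intros G U; auto.
  - intros G1 G2 G3 h1 h2 U hU; auto.
  - intros Ch HCh HCh_chain. apply chain_upper_bound; auto.
  - exists G. split; auto. split; auto.
    intros G' HG' HGG'. apply Hmax; auto. split; auto. intros U HU; auto.
Qed.

Lemma ultrafilter_cluster_compact T :
  (forall F, stable_ultrafilter M S F -> exists x, cluster_point S T F x) ->
  stable_compact M S T.
Proof.
  intros H F HF.
  destruct (stable_ultrafilter_above HF) as [G [HG HFG]].
  destruct (H G HG) as [x [Sx Hx]].
  exists x; split; [auto|]. intros U HU Ux W HW. apply Hx; auto.
Qed.
End Ultrafilter.

Definition concat2 A U V : E -> Prop :=
  concat (partition2 A) (fun k => match k with 0 => U | _ => V end).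

Lemma concat2_iff A U V x : meas A -> (exists v, V v) ->
  concat2 A U V x <->
  (exists u, U u /\ eqon A x u) /\ (exists v, V v /\ eqon (fun w => ~ A w) x v).
Proof.
  intros HA [v0 Hv0]. unfold concat2. rewrite concat_iff. split.
  - intro H. split; [apply (H 0%nat) | apply (H 1%nat)].
  - intros [H1 H2] [|[|k]]; simpl; auto. exists v0; split; auto. apply eqon_empty.
Qed.

Lemma filter_list_inter S (F : (E -> Prop) -> Prop) (L : list (E -> Prop)) : is_filter S F ->
  (forall U, In U L -> F U) -> F (fun x => S x /\ forall U, In U L -> U x).
Proof.
  intros [F1 [F2 [F3 [F4 F5]]]].
  induction L as [|a L IH]; intros HL.
  - rewrite (set_ext _ S); auto. intro x; simpl; split; [tauto | intro; split; tauto].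
  - rewrite (set_ext _ (fun x => a x /\ (S x /\ forall U, In U L -> U x))).
    + apply F4; [apply HL; simpl; auto | apply IH; intros; apply HL; simpl; auto].
    + intro x; simpl; split.
      * intros [HSx HU]. split; [apply HU; left; reflexivity|].
        split; auto. intros U HUL. apply HU; right; auto.
      * intros [Hax [HSx HU]]. split; auto. intros U [<-|HUL]; auto; apply HU; auto.
Qed.

(** * Closed sets of a stable topology *)

Section Topology.
Variables (S : E -> Prop) (T Base : (E -> Prop) -> Prop).
Hypotheses (HS : stable_set M S) (HT : is_topology S T)
  (HBase : is_base T Base) (HBase_stable : stable_coll M Base).

Lemma base_nbhd U x : T U -> U x -> exists V, Base V /\ V x /\ forall y, V y -> U y.
Proof. intros; apply HBase; auto. Qed.

Lemma base_cover x : S x -> exists V, Base V /\ V x.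
Proof. intro H. destruct (base_nbhd x (proj1 (proj2 HT)) H) as [V [h1 [h2 _]]]; eauto. Qed.

Lemma base_concat2 A U V : meas A -> Base U -> Base V -> Base (concat2 A U V).
Proof.
  intros HA HU HV. apply HBase_stable; [apply partition2_partition; auto|]. intros [|k]; auto.
Qed.

Definition closure V : E -> Prop :=
  fun x => S x /\ forall U, T U -> U x -> exists y, U y /\ V y.

Lemma closed_of_closure W : (forall x, W x -> S x) -> (forall x, closure W x -> W x) ->
  closed_in S T W.
Proof.
  intros Hs Hc. split; auto.
  rewrite (set_ext _ (fun x => exists U, (T U /\ forall y, U y -> ~ W y) /\ U x)).
  - apply HT. intros U [h _]; auto.
  - intro x; split.
    + intros [h1 h2]. apply NNPP; intro C. apply h2, Hc. split; auto.
      intros U HU HUx. apply NNPP; intro C2. apply C. exists U; split; auto.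
      split; auto. intros y hy hw. apply C2; eauto.
    + intros [U [[h1 h2] h3]]. split; [apply (proj1 HT U); auto | apply h2; auto].
Qed.

Lemma closure_closed_sub W x : closed_in S T W -> closure W x -> W x.
Proof.
  intros [Hs Ho] [Sx Hx]. apply NNPP; intro C.
  destruct (Hx _ Ho (conj Sx C)) as [y [[_ h1] h2]]. auto.
Qed.

Lemma closure_incl V x : (forall y, V y -> S y) -> V x -> closure V x.
Proof. intros H Hx. split; auto. intros; eauto. Qed.

Lemma closure_closed V : closed_in S T (closure V).
Proof.
  apply closed_of_closure; [intros x [h _]; auto|].
  intros x [Sx Hx]. split; auto. intros U HU HUx.
  destruct (Hx U HU HUx) as [y [Uy [Sy Hy]]]. apply Hy; auto.
Qed.

Lemma closure_stable V : stable_set M V -> (forall x, V x -> S x) -> stable_set M (closure V).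
Proof.
  intros HV HVS. split.
  { destruct (stable_ne HV) as [v Hv]. exists v. apply closure_incl; auto. }
  intros D z HD Hz x Hx. split.
  { apply stable_glue with D; auto. intro k; exists (z k); split; [apply (Hz k) | apply Hx]. }
  intros U HU HUx. destruct (base_nbhd x HU HUx) as [U0 [B0 [U0x U0U]]].
  assert (Hk : forall k, exists v, V v /\ exists p, U0 p /\ eqon (D k) v p).
  { intro k. destruct (base_cover (proj1 (Hz k))) as [U' [B' U'z]].
    assert (HDk := partition_meas HD k).
    destruct (proj2 (Hz k) _ (proj1 HBase _ (base_concat2 (D k) HDk B0 B'))) as [v [Hv1 Hv2]].
    { apply (concat2_iff (D k) U0 U' (z k) HDk (ex_intro _ _ U'z)). split.
      - exists x; split; auto. apply eqon_sym, Hx.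
      - exists (z k); split; auto. apply eqon_refl. }
    exists v; split; auto.
    destruct (proj1 (concat2_iff (D k) U0 U' v HDk (ex_intro _ _ U'z)) Hv1) as [[p [h1 h2]] _].
    eauto. }
  destruct (choice _ Hk) as [v Hv].
  destruct (concat_exists v HD) as [y Hy].
  exists y. split.
  - apply U0U, stable_glue with D; [apply HBase_stable; auto | auto |].
    intro k. destruct (Hv k) as [_ [p [h1 h2]]].
    exists p; split; auto. apply eqon_trans with (v k); auto. apply Hy.
  - apply stable_glue with D; auto. intro k. exists (v k); split; [apply Hv | apply Hy].
Qed.

Lemma concat_closed D (W : nat -> E -> Prop) : partition D ->
  (forall k, stable_set M (W k)) -> (forall k, closed_in S T (W k)) ->
  closed_in S T (concat D W).
Proof.
  intros HD HWs HWc.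
  apply closed_of_closure; [apply concat_sub; auto; intros k x; apply HWc|].
  intros x [Sx Hx]. apply concat_iff. intro k.
  assert (HDk := partition_meas HD k).
  destruct (stable_ne (HWs k)) as [wk Hwk].
  destruct (glue2 (D k) x wk HDk) as [yk [Hy1 Hy2]].
  exists yk. split; [|apply eqon_sym; auto].
  apply closure_closed_sub; auto. split.
  { apply (@stable_glue2 S (D k) x wk); auto. apply (proj1 (HWc k)); auto. }
  intros U HU HUy. destruct (base_nbhd yk HU HUy) as [U1 [B1 [U1y U1U]]].
  destruct (base_cover Sx) as [Ux [Bx Uxx]].
  destruct (Hx _ (proj1 HBase _ (base_concat2 (D k) HDk B1 Bx))) as [z [Hz1 Hz2]].
  { apply (concat2_iff (D k) U1 Ux x HDk (ex_intro _ _ Uxx)). split.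
    - exists yk; split; auto. apply eqon_sym; auto.
    - exists x; split; auto. apply eqon_refl. }
  destruct (proj1 (concat2_iff (D k) U1 Ux z HDk (ex_intro _ _ Uxx)) Hz1) as [[u [hu1 hu2]] _].
  destruct (proj1 (concat_iff D W z) Hz2 k) as [w' [hw1 hw2]].
  destruct (glue2 (D k) z yk HDk) as [z' [Hz'1 Hz'2]].
  exists z'. split.
  - apply U1U. apply (@stable_glue2 U1 (D k) u yk); auto.
    + apply HBase_stable; auto.
    + eapply eqon_trans; eauto.
  - apply (@stable_glue2 (W k) (D k) w' wk); auto.
    eapply eqon_trans; eauto. eapply eqon_trans; eauto.
Qed.

(** * Compactness and the finite intersection property *)

Definition list_inter (L : list (E -> Prop)) : E -> Prop := fun x => forall U, In U L -> U x.

Definition list_in (X : (E -> Prop) -> Prop) (L : list (E -> Prop)) : Prop :=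
  L <> nil /\ forall U, In U L -> X U.

Lemma list_in_app X L1 L2 : list_in X L1 -> list_in X L2 -> list_in X (L1 ++ L2).
Proof.
  intros [h1 h2] [h3 h4]. split; [destruct L1; simpl; congruence|].
  intros U HU. apply in_app_or in HU. destruct HU; auto.
Qed.

Lemma list_in_singleton (X : (E -> Prop) -> Prop) U : X U -> list_in X (U :: nil).
Proof. intro HU. split; [congruence | intros U' [<-|[]]; auto]. Qed.

Lemma list_inter_app L1 L2 :
  list_inter (L1 ++ L2) = fun x => list_inter L1 x /\ list_inter L2 x.
Proof.
  apply set_ext; intro x; unfold list_inter; split.
  - intro H; split; intros U HU; apply H; apply in_or_app; auto.
  - intros [H1 H2] U HU. apply in_app_or in HU. destruct HU; [apply H1 | apply H2]; auto.
Qed.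

Lemma list_inter_singleton U : list_inter (U :: nil) = U.
Proof. apply set_ext; intro x; unfold list_inter; simpl; firstorder congruence. Qed.

Lemma stable_finite_sub_list X L : list_in X L ->
  stable_finite_sub M X (fun V => exists Vk : nat -> E -> Prop,
    (forall k, st M (fun U => In U L) (Vk k)) /\ V = concat trivial_partition Vk).
Proof.
  intros [Hn HL]. exists trivial_partition, (fun _ => L).
  split; [apply trivial_partition_partition | split; [intro; split; auto | intro; tauto]].
Qed.

Lemma stable_finite_sub_list_mem X L U : (forall U, X U -> stable_set M U) ->
  In U L -> X U -> exists Vk : nat -> E -> Prop,
    (forall k, st M (fun U => In U L) (Vk k)) /\ U = concat trivial_partition Vk.
Proof.
  intros Hst HUL HU. exists (fun _ => U). split.
  - intro k. apply st_self; auto.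
  - symmetry; apply concat_const; auto. apply trivial_partition_partition.
Qed.

Section CompactToFIP.
Variable C : (E -> Prop) -> Prop.
Hypotheses (HC : stable_coll M C) (HC_closed : forall U, C U -> closed_in S T U)
  (HC_fip : forall Ct, stable_finite_sub M C Ct -> exists x, forall V, Ct V -> V x).

Lemma list_inter_ne L : list_in C L -> exists x, list_inter L x.
Proof.
  intro HL. destruct (HC_fip (@stable_finite_sub_list C L HL)) as [x Hx].
  exists x. intros U HU. apply Hx. apply stable_finite_sub_list_mem with C; auto.
  - apply HC.
  - apply HL; auto.
Qed.

Lemma list_inter_stable L : list_in C L -> stable_set M (list_inter L).
Proof.
  intros HL. split; [apply list_inter_ne; auto|].
  intros D y HD Hy x Hx U HU. apply (proj2 (proj1 (proj2 HC) U (proj2 HL U HU))) with D y; auto.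
  intro k; apply Hy; auto.
Qed.

Lemma list_inter_sub L x : list_in C L -> list_inter L x -> S x.
Proof.
  intros [Hn HL] Hx. destruct L as [|U L]; [congruence|].
  apply (proj1 (HC_closed (HL U (or_introl eq_refl)))). apply Hx; left; auto.
Qed.

Definition fip_family U := exists L, list_in C L /\ U = list_inter L.

Lemma fip_family_singleton U : C U -> fip_family U.
Proof.
  intro HU. exists (U :: nil).
  split; [apply list_in_singleton; auto | symmetry; apply list_inter_singleton].
Qed.

Lemma fip_family_stable U : fip_family U -> stable_set M U.
Proof. intros [L [HL ->]]. apply list_inter_stable; auto. Qed.

Lemma fip_family_sub U x : fip_family U -> U x -> S x.
Proof. intros [L [HL ->]]. apply list_inter_sub; auto. Qed.

Lemma fip_filter : stable_filter M S (gen_filter S (st M fip_family)).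
Proof.
  apply st_filter; [| exact fip_family_stable | exact fip_family_sub | | exact HS].
  - destruct HC as [[U HU] _]. exists U. apply fip_family_singleton; auto.
  - intros U V [L1 [HL1 ->]] [L2 [HL2 ->]]. exists (L1 ++ L2).
    split; [apply list_in_app; auto | symmetry; apply list_inter_app].
Qed.

Lemma compact_fip : stable_compact M S T -> exists x, forall V, C V -> V x.
Proof.
  intro HK. destruct (HK _ fip_filter) as [x [Sx Hx]].
  exists x. intros V HV. apply NNPP; intro HVx.
  destruct (HC_closed HV) as [HVS HVo].
  destruct (Hx _ HVo (conj Sx HVx) V) as [y [[_ h1] h2]]; auto.
  apply st_filter_mem;
    [exact fip_family_stable | exact fip_family_sub | apply fip_family_singleton; auto].
Qed.
End CompactToFIP.

Section FIPToCompact.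
Variables F BF : (E -> Prop) -> Prop.
Hypotheses (HF : is_filter S F) (HBF : filter_base F BF) (HBF_stable : stable_coll M BF).

Definition closed_filter_sets : (E -> Prop) -> Prop := fun W =>
  stable_set M W /\ closed_in S T W /\ exists V, F V /\ forall x, V x -> W x.

Lemma closed_filter_sets_stable : stable_coll M closed_filter_sets.
Proof.
  split; [|split].
  - exists S. split; auto. split; [split; auto|exists S; split; auto; apply HF].
    rewrite (set_ext (fun x => S x /\ ~ S x) (fun _ => False)) by tauto. apply HT.
  - intros U [h _]; auto.
  - intros D W HD HW. split; [|split].
    + apply concat_stable; auto. intro; apply HW.
    + apply concat_closed; auto; intro k; apply HW.
    + assert (Hb : forall k, exists b, BF b /\ forall x, b x -> W k x).
      { intro k. destruct (HW k) as [_ [_ [V [HV HVW]]]].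
        destruct (proj2 HBF V HV) as [b [Hb1 Hb2]]. exists b; split; auto. }
      destruct (choice _ Hb) as [b Hbb].
      exists (concat D b). split.
      * apply (proj1 HBF). apply HBF_stable; auto. intro; apply Hbb.
      * apply concat_mono. intro k; apply Hbb.
Qed.

Lemma closed_filter_sets_fip Ct : stable_finite_sub M closed_filter_sets Ct ->
  exists x, forall V, Ct V -> V x.
Proof.
  intros [D [Ls [HD [HLs HCt]]]].
  assert (Hw : forall k, exists w, S w /\ forall U, In U (Ls k) -> U w).
  { intro k. apply (proj1 (proj2 HF)). apply filter_list_inter; auto.
    intros U HU. destruct (proj2 (HLs k) U HU) as [_ [[HUS _] [V [HV HVU]]]].
    apply (proj2 (proj2 (proj2 (proj2 HF)))) with V; auto. }
  destruct (choice _ Hw) as [w Hww].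
  destruct (concat_exists w HD) as [z Hz].
  exists z. intros V HV. apply HCt in HV. destruct HV as [Vk [HVk ->]].
  exists w. split; auto. intro k. destruct (HVk k) as [B [U [HB [HU ->]]]].
  exists (fun _ => w k). split; [intro j; apply Hww; auto | intro; reflexivity].
Qed.
End FIPToCompact.

Lemma fip_compact :
  (forall C, stable_coll M C -> (forall U, C U -> closed_in S T U) ->
     (forall Ct, stable_finite_sub M C Ct -> exists x, forall V, Ct V -> V x) ->
     exists x, forall V, C V -> V x) ->
  stable_compact M S T.
Proof.
  intros HIV F [HF [BF [HBF HBF_stable]]].
  assert (BF_sub : forall V x, BF V -> V x -> S x)
    by (intros V x HV; apply (proj1 (proj2 (proj2 HF))), HBF; auto).
  destruct (HIV _ (closed_filter_sets_stable HF HBF HBF_stable)) as [x Hx].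
  - intros U [_ [h _]]; auto.
  - apply closed_filter_sets_fip; auto.
  - assert (Sx : S x).
    { apply Hx. split; auto. split; [split; auto|exists S; split; auto; apply HF].
      rewrite (set_ext (fun x => S x /\ ~ S x) (fun _ => False)) by tauto. apply HT. }
    exists x. split; auto. intros U HU HUx W HW.
    destruct (proj2 HBF W HW) as [W' [HW'1 HW'2]].
    assert (Hcl : closure W' x).
    { apply Hx. split; [|split].
      - apply closure_stable; [apply HBF_stable; auto | intros; eapply BF_sub; eauto].
      - apply closure_closed.
      - exists W'. split; [apply HBF; auto|].
        intros; apply closure_incl; auto. intros; eapply BF_sub; eauto. }
    destruct (proj2 Hcl U HU HUx) as [y [h1 h2]]. eauto.
Qed.

(** * Compactness and stable finite subcovers *)

Section CompactToFiniteSubcover.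
Variable O : (E -> Prop) -> Prop.
Hypotheses (HO : stable_coll M O) (HOT : forall U, O U -> T U).

Definition st_list (L : list (E -> Prop)) := st M (fun U => In U L).

Lemma st_list_stable L V : list_in O L -> st_list L V -> stable_set M V.
Proof.
  intros [_ HL] H. apply st_stable with (fun U => In U L); auto.
  intros U HU; apply HO; auto.
Qed.

Lemma st_list_sub L V x : list_in O L -> st_list L V -> V x -> S x.
Proof.
  intros [_ HL] [D [U [HD [HU ->]]]]. apply concat_sub; auto.
  intros k y Hy. apply (proj1 HT (U k)); auto.
Qed.

Lemma st_list_ex L : list_in O L -> exists V, st_list L V.
Proof.
  intros [Hn HL]. destruct L as [|U L]; [congruence|]. exists U.
  apply st_self; [left; auto | apply HO, HL; left; auto].
Qed.

Lemma st_list_app_l L1 L2 V : st_list L1 V -> st_list (L1 ++ L2) V.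
Proof. apply st_mono. intros; apply in_or_app; auto. Qed.

Lemma st_list_app_r L1 L2 V : st_list L2 V -> st_list (L1 ++ L2) V.
Proof. apply st_mono. intros; apply in_or_app; auto. Qed.

Definition covered_on L A x := exists V, st_list L V /\ exists v, V v /\ eqon A x v.

Lemma covered_on_sub L A B x : meas A -> meas B -> (forall w, B w -> A w) ->
  covered_on L A x -> covered_on L B x.
Proof.
  intros HA HB HBA [V [HV [v [Hv Hxv]]]]. exists V; split; auto.
  exists v; split; auto. apply eqon_sub with A; auto.
Qed.

Lemma covered_on_cunion L D x : list_in O L -> (forall n, meas (D n)) -> disjoint D ->
  (forall n, covered_on L (D n) x) -> covered_on L (fun w => exists n, D n w) x.
Proof.
  intros HL HD Hdis HN.
  destruct (st_list_ex HL) as [V0 HV0]. destruct (stable_ne (st_list_stable HL HV0)) as [v0 Hv0].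
  destruct (choice _ HN) as [Vn HVn].
  destruct (choice (fun n v => Vn n v /\ eqon (D n) x v)) as [vn Hvn]; [intro n; apply HVn|].
  destruct (@disjoint_concat_glue D V0 Vn HD Hdis v0 vn Hv0 (fun n => proj1 (Hvn n)))
    as [v [Hv Hvvn]].
  exists (disjoint_concat D V0 Vn). split.
  - apply st_disjoint_concat; auto. intro n; apply HVn.
  - exists v. split; auto.
  apply eqon_cunion; auto. intro n. apply eqon_trans with (vn n); [apply Hvn | apply eqon_sym, Hvvn].
Qed.

Definition finitely_covered A :=
  meas A /\ exists L, list_in O L /\ forall x, S x -> covered_on L A x.

Lemma finitely_covered_empty : finitely_covered (fun _ => False).
Proof.
  split; [apply meas_empty|]. destruct HO as [[U HU] _].
  exists (U :: nil). split; [apply list_in_singleton; auto|].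
  intros x Sx. destruct (st_list_ex (list_in_singleton O U HU)) as [V HV].
  exists V; split; auto.
  destruct (stable_ne (st_list_stable (list_in_singleton O U HU) HV)) as [v Hv].
  exists v; split; auto. apply eqon_empty.
Qed.

Lemma finitely_covered_union A B : finitely_covered A -> finitely_covered B ->
  finitely_covered (fun w => A w \/ B w).
Proof.
  intros [HA [L1 [HL1 G1]]] [HB [L2 [HL2 G2]]]. split; [apply meas_union; auto|].
  exists (L1 ++ L2). split; [apply list_in_app; auto|].
  intros x Sx. destruct (G1 x Sx) as [V1 [HV1 [v1 [Hv1 E1]]]].
  destruct (G2 x Sx) as [V2 [HV2 [v2 [Hv2 E2]]]].
  exists (concat2 A V1 V2). split.
  { apply st_concat; [apply partition2_partition; auto|].
    intros [|j]; [apply st_list_app_l | apply st_list_app_r]; auto. }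
  destruct (glue2 A v1 v2 HA) as [v [Ev1 Ev2]].
  exists v. split; [apply (concat2_iff A V1 V2 v HA (ex_intro _ _ Hv2)); split; eauto|].
  apply eqon_ext with (fun w => A w \/ (B w /\ ~ A w)); [intro w; tauto|].
  apply eqon_union; auto; [apply meas_diff; auto | apply eqon_trans with v1; auto; apply eqon_sym; auto|].
  apply eqon_trans with v2.
  - apply eqon_interl; auto. apply meas_compl; auto.
  - apply eqon_sym, eqon_interr; auto. apply meas_compl; auto.
Qed.

Definition uncovered_on L A x := S x /\
  forall U, In U L -> forall u, U u -> forall A', meas A' -> (forall w, A' w -> A w) ->
    eqon A' x u -> P A' = 0.

Lemma uncovered_on_sub L A B x : (forall w, B w -> A w) ->
  uncovered_on L A x -> uncovered_on L B x.
Proof. intros HBA [Sx Hx]. split; auto. intros U HU u Hu A' HA' Hs. apply (Hx U); auto. Qed.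

Lemma uncovered_on_patch L A D (y : nat -> E) x : meas A -> (forall n, meas (D n)) -> S x ->
  (forall w, A w -> exists n, D n w) -> (forall n, uncovered_on L (fun w => A w /\ D n w) (y n)) ->
  (forall n, eqon (D n) x (y n)) -> uncovered_on L A x.
Proof.
  intros HA HD Sx Hcov Hy Hxy. split; auto.
  intros U HU u Hu A' HA' HA'A Heq. apply prob_cover_eq0 with D; auto.
  intro n. assert (HA'n : meas (fun w => A' w /\ D n w)) by (apply meas_inter; auto).
  apply (proj2 (Hy n) U HU u Hu); auto.
  - intros w [h1 h2]; auto.
  - apply eqon_trans with x.
    + apply eqon_sym, eqon_interr; auto.
    + apply eqon_interl; auto.
Qed.

Lemma uncovered_on_cunion L D (y : nat -> E) : (forall n, meas (D n)) -> disjoint D ->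
  (forall n, uncovered_on L (D n) (y n)) -> exists x, uncovered_on L (fun w => exists n, D n w) x.
Proof.
  intros HD Hdis Hy. destruct (stable_ne HS) as [s0 Hs0].
  destruct (glue_disjoint y s0 HD Hdis) as [x [Hxy Hmem]].
  exists x. apply uncovered_on_patch with D y; auto.
  - apply meas_cunion; auto.
  - apply Hmem; auto. intro n; apply Hy.
  - intro n. apply uncovered_on_sub with (D n); [tauto | auto].
Qed.

Section Uncovered.
Variable H : Omega -> Prop.
Hypothesis HmH : meas H.
Hypothesis H_not_covered :
  forall A, meas A -> (forall w, A w -> H w) -> finitely_covered A -> P A = 0.

Lemma covered_off_maximal L G x : list_in O L -> meas G ->
  (forall A, meas A -> (forall w, A w -> H w /\ ~ G w) -> (exists x, uncovered_on L A x) -> P A = 0) ->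
  S x -> covered_on L (fun w => H w /\ ~ G w) x.
Proof.
  intros HL HG HG0 Sx. set (K := fun w => H w /\ ~ G w).
  assert (HK : meas K) by (apply meas_diff; auto).
  destruct (maximal_exhaustion PS (fun A => covered_on L A x) K HK)
    as [Gx [HGx [HGxK [HcovGx HGx0]]]].
  - intros A B HA HB HBA. apply (@covered_on_sub L A B x); auto.
  - destruct (st_list_ex HL) as [V HV]. destruct (stable_ne (st_list_stable HL HV)) as [v Hv].
    exists V. split; auto. exists v. split; auto. apply eqon_empty.
  - intros D HD Hdis HDc. apply covered_on_cunion; auto.
  - assert (HR : meas (fun w => K w /\ ~ Gx w)) by (apply meas_diff; auto).
    destruct HcovGx as [V [HV [v [Hv Hxv]]]].
    exists V. split; auto. exists v. split; auto.
    apply eqon_split with Gx; auto.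
    apply HG0; [exact HR | intros w [h _]; exact h |].
    exists x. split; auto. intros U HU u Hu A HA HAR Hxu.
    apply HGx0; [exact HA | intros w Hw; apply HAR; auto |].
    exists U. split; [apply st_self; auto; apply HO, HL; auto|]. exists u; auto.
Qed.

Lemma uncovered_exists L : list_in O L -> exists x, uncovered_on L H x.
Proof.
  intro HL. destruct (stable_ne HS) as [s0 Hs0].
  destruct (maximal_exhaustion PS (fun A => exists x, uncovered_on L A x) H HmH)
    as [G [HG [HGH [[x Hx] HG0]]]].
  - intros A B HA HB HBA [x Hx]. exists x. apply uncovered_on_sub with A; auto.
  - exists s0. split; auto. intros U HU u Hu A HA HA0 _.
    apply prob_sub_eq0 with (fun _ => False); auto using meas_empty, prob_empty.
  - intros D HD Hdis HDu. destruct (choice _ HDu) as [y Hy].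
    apply uncovered_on_cunion with y; auto.
  - assert (HR : P (fun w => H w /\ ~ G w) = 0).
    { apply H_not_covered; [apply meas_diff; auto | intros w [h _]; auto |].
      split; [apply meas_diff; auto|]. exists L. split; auto.
      intros y Sy. apply covered_off_maximal; auto. }
    exists x. split; [apply Hx|]. intros U HU u Hu A HA HAH Hxu.
    apply prob_eq0_split with G; auto.
    + apply (proj2 Hx U HU u Hu); [apply meas_inter; auto | tauto |].
      apply eqon_interl; auto.
    + apply prob_sub_eq0 with (fun w => H w /\ ~ G w); [apply meas_diff | apply meas_diff | |]; auto.
      intros w [h1 h2]; auto.
Qed.

Lemma uncovered_on_stable L : list_in O L -> stable_set M (uncovered_on L H).
Proof.
  intro HL. split; [apply uncovered_exists; auto|].
  intros D y HD Hy x Hx.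
  apply uncovered_on_patch with D y; auto.
  - apply partition_meas; auto.
  - apply stable_glue with D; auto. intro k; exists (y k); split; [apply Hy | apply Hx].
  - intros w _; apply HD.
  - intro n. apply uncovered_on_sub with H; [tauto | auto].
Qed.

Definition uncovered_family U := exists L, list_in O L /\ U = uncovered_on L H.

Lemma uncovered_family_stable U : uncovered_family U -> stable_set M U.
Proof. intros [L [HL ->]]. apply uncovered_on_stable; auto. Qed.

Lemma uncovered_family_sub U x : uncovered_family U -> U x -> S x.
Proof. intros [L [HL ->]] [Sx _]; auto. Qed.

Lemma uncovered_on_app L1 L2 :
  uncovered_on (L1 ++ L2) H = fun x => uncovered_on L1 H x /\ uncovered_on L2 H x.
Proof.
  apply set_ext; intro x; unfold uncovered_on; split.
  - intros [Sx Hx]; split; split; auto; intros U HU; apply Hx; apply in_or_app; auto.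
  - intros [[Sx H1] [_ H2]]. split; auto. intros U HU. apply in_app_or in HU.
    destruct HU; [apply H1 | apply H2]; auto.
Qed.

Lemma compact_uncovered_null : stable_compact M S T ->
  (forall x, S x -> exists U, O U /\ U x) -> P H = 0.
Proof.
  intros HK Hcov.
  destruct (HK (gen_filter S (st M uncovered_family))) as [x [Sx Hx]].
  { apply st_filter.
  - destruct HO as [[U HU] _]. exists (uncovered_on (U :: nil) H), (U :: nil).
    split; auto. apply list_in_singleton; auto.
  - exact uncovered_family_stable.
  - exact uncovered_family_sub.
  - intros U V [L1 [HL1 ->]] [L2 [HL2 ->]]. exists (L1 ++ L2).
    split; [apply list_in_app; auto | symmetry; apply uncovered_on_app].
  - exact HS. }
  destruct (Hcov x Sx) as [U [HU Ux]].
  destruct (Hx U (HOT HU) Ux (uncovered_on (U :: nil) H)) as [y [Uy [_ Hy]]].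
  - apply st_filter_mem; [exact uncovered_family_stable | exact uncovered_family_sub |].
    exists (U :: nil). split; auto. apply list_in_singleton; auto.
  - apply (Hy U (or_introl eq_refl) y Uy H); auto. apply eqon_refl.
Qed.
End Uncovered.

Lemma finite_subcover_of_null_rest D : (forall n, finitely_covered (D n)) ->
  P (fun w => ~ exists n, D n w) = 0 ->
  exists Ot, stable_finite_sub M O Ot /\ (forall x, S x <-> exists V, Ot V /\ V x).
Proof.
  intros HD Hnull.
  assert (HmD : forall n, meas (D n)) by (intro n; apply HD).
  destruct (choice _ (fun n => proj2 (HD n))) as [Ln HLn].
  assert (HQ := disjointify_partition PS D HmD).
  (* the piece [disjointify D 0] is null, so any list may serve there *)
  set (Ls := fun k => Ln (pred k)).
  exists (fun V => exists Vk : nat -> E -> Prop,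
    (forall k, st_list (Ls k) (Vk k)) /\ V = concat (disjointify D) Vk).
  split.
  { exists (disjointify D), Ls. split; auto. split; [intro k; apply HLn | intro V; tauto]. }
  intro x; split.
  - intro Sx.
    assert (Hp : forall k, exists p : (E -> Prop) * E,
      st_list (Ls k) (fst p) /\ fst p (snd p) /\ eqon (disjointify D k) x (snd p)).
    { intros [|n].
      - destruct (st_list_ex (proj1 (HLn 0%nat))) as [V HV].
        destruct (stable_ne (st_list_stable (proj1 (HLn 0%nat)) HV)) as [v Hv].
        exists (V, v). split; auto. split; auto. apply eqon_null; [apply (partition_meas HQ) | auto].
      - destruct (proj2 (HLn n) x Sx) as [V [HV [v [Hv Hxv]]]].
        exists (V, v). split; auto. split; auto.
        apply eqon_sub with (D n); auto; [apply (partition_meas HQ) | simpl; tauto]. }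
    destruct (choice _ Hp) as [p Hpp].
    exists (concat (disjointify D) (fun k => fst (p k))). split.
    + exists (fun k => fst (p k)); split; auto. intro k; apply Hpp.
    + exists (fun k => snd (p k)). split; intro k; apply Hpp.
  - intros [V [[Vk [HVk ->]] HVx]]. revert HVx. apply concat_sub; auto.
    intros k y. apply st_list_sub with (Ls k); [apply HLn | apply HVk].
Qed.

Lemma compact_finite_subcover : stable_compact M S T ->
  (forall x, S x <-> exists U, O U /\ U x) ->
  exists Ot, stable_finite_sub M O Ot /\ (forall x, S x <-> exists V, Ot V /\ V x).
Proof.
  intros HK Hcov.
  destruct (union_closed_exhaustion PS finitely_covered) as [D [HD Hess]].
  - intros A [h _]; auto.
  - apply finitely_covered_empty.
  - apply finitely_covered_union.
  - assert (HmD : forall n, meas (D n)) by (intro n; apply HD).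
    apply finite_subcover_of_null_rest with D; auto.
    apply compact_uncovered_null; auto.
    + apply meas_compl, meas_cunion; auto.
    + intros A HA HAH HAc. rewrite <- (Hess A HAc).
      apply prob_ext; intro w; split; [intro h; split; [auto | apply HAH; auto] | tauto].
    + intros x Sx. apply Hcov; auto.
Qed.
End CompactToFiniteSubcover.

Section FiniteSubcoverToCompact.
Variables F BF : (E -> Prop) -> Prop.
Hypotheses (HF : is_filter S F) (HBF : filter_base F BF) (HBF_stable : stable_coll M BF).

Lemma agree_cunion U W D : stable_set M U -> stable_set M W ->
  (forall n, meas (D n)) -> disjoint D ->
  (forall n, exists u w, U u /\ W w /\ eqon (D n) u w) ->
  exists u w, U u /\ W w /\ eqon (fun w => exists n, D n w) u w.
Proof.
  intros HU HW HD Hdis Hn.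
  destruct (choice (fun n (p : E * E) => U (fst p) /\ W (snd p) /\ eqon (D n) (fst p) (snd p)))
    as [p Hp]; [intro n; destruct (Hn n) as [u [w h]]; exists (u, w); auto|].
  destruct (stable_ne HU) as [u0 Hu0]. destruct (stable_ne HW) as [w0 Hw0].
  destruct (glue_disjoint (fun n => fst (p n)) u0 HD Hdis) as [u [Hu Humem]].
  destruct (glue_disjoint (fun n => snd (p n)) w0 HD Hdis) as [w [Hw Hwmem]].
  exists u, w. split; [|split].
  - apply Humem; auto. intro n; apply Hp.
  - apply Hwmem; auto. intro n; apply Hp.
  - apply eqon_cunion; auto. intro n.
    apply eqon_trans with (fst (p n)); [apply Hu|].
    apply eqon_trans with (snd (p n)); [apply Hp | apply eqon_sym, Hw].
Qed.

Definition cluster_on A x := forall U, Base U -> U x -> forall W, BF W ->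
  exists u w, U u /\ W w /\ eqon A u w.

Lemma cluster_on_sub A B x : meas A -> meas B -> (forall w, B w -> A w) ->
  cluster_on A x -> cluster_on B x.
Proof.
  intros HA HB Hs Hc U HU Ux W HW. destruct (Hc U HU Ux W HW) as [u [w [h1 [h2 h3]]]].
  exists u, w. split; auto. split; auto. apply eqon_sub with A; auto.
Qed.

Lemma cluster_on_transfer A x x' U W : meas A -> S x' -> eqon A x x' -> cluster_on A x' ->
  Base U -> U x -> BF W -> exists u w, U u /\ W w /\ eqon A u w.
Proof.
  intros HA Sx' Hxx' Hc HU Ux HW.
  destruct (base_cover Sx') as [U' [HU' U'x']].
  assert (Hin : concat2 A U U' x').
  { apply (concat2_iff A U U' x' HA (ex_intro _ _ U'x')). split.
    - exists x; split; auto. apply eqon_sym; auto.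
    - exists x'; split; auto. apply eqon_refl. }
  destruct (Hc _ (base_concat2 A HA HU HU') Hin W HW) as [u [w [Hu [Hw Huw]]]].
  destruct (proj1 (concat2_iff A U U' u HA (ex_intro _ _ U'x')) Hu) as [[p [Hp Hup]] _].
  exists p, w. split; auto. split; auto. apply eqon_trans with u; auto. apply eqon_sym; auto.
Qed.

Lemma cluster_on_conull G x : S x -> meas G -> P (fun w => ~ G w) = 0 -> cluster_on G x ->
  cluster_point S T F x.
Proof.
  intros Sx HG H0 Hc. split; auto. intros U HU Ux W HW.
  destruct (base_nbhd x HU Ux) as [U0 [HU0 [U0x U0U]]].
  destruct (proj2 HBF W HW) as [W' [HW' W'W]].
  destruct (Hc U0 HU0 U0x W' HW') as [u [w [Hu [Hw Huw]]]].
  rewrite (eqon_conull HG H0 Huw) in Hu. exists w; auto.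
Qed.

Definition has_cluster A := exists x, S x /\ cluster_on A x.

Lemma has_cluster_cunion D : (forall n, meas (D n)) -> disjoint D ->
  (forall n, has_cluster (D n)) -> has_cluster (fun w => exists n, D n w).
Proof.
  intros HD Hdis Hn. destruct (choice _ Hn) as [xn Hxn].
  destruct (stable_ne HS) as [x0 Sx0].
  destruct (glue_disjoint xn x0 HD Hdis) as [x [Hx Hxmem]].
  exists x. split; [apply Hxmem; auto; intro n; apply Hxn|].
  intros U HU Ux W HW. apply agree_cunion; auto.
  - apply HBase_stable; auto.
  - apply HBF_stable; auto.
  - intro n. apply cluster_on_transfer with x (xn n); auto; apply Hxn.
Qed.

Lemma cluster_exhaustion : exists G, meas G /\ has_cluster G /\
  forall A, meas A -> (forall w, A w -> ~ G w) -> has_cluster A -> P A = 0.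
Proof.
  destruct (stable_ne HS) as [x0 Sx0].
  destruct (maximal_exhaustion PS has_cluster (fun _ => True) (meas_full PS))
    as [G [HG [_ [HCG HG0]]]].
  - intros A B HA HB Hs [x [Sx Hx]]. exists x; split; auto. apply cluster_on_sub with A; auto.
  - exists x0. split; auto. intros U HU Ux W HW. destruct (stable_ne (proj1 (proj2 HBF_stable) W HW)) as [w Hw].
    exists x0, w. split; auto. split; auto. apply eqon_empty.
  - apply has_cluster_cunion.
  - exists G. split; [auto | split; [auto|]]. intros A HA Hs HC. apply HG0; auto.
Qed.

Definition separated_on A U W := forall A', meas A' -> (forall w, A' w -> A w) ->
  forall u w, U u -> W w -> eqon A' u w -> P A' = 0.

Lemma separated_on_sub A B U W : (forall w, B w -> A w) ->
  separated_on A U W -> separated_on B U W.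
Proof. intros HBA Hsep A' HA' HA'B. apply Hsep; auto. Qed.

Lemma separated_on_concat A Q (Y Z : nat -> E -> Prop) : meas A -> partition Q ->
  (forall k, separated_on (fun w => A w /\ Q k w) (Y k) (Z k)) ->
  separated_on A (concat Q Y) (concat Q Z).
Proof.
  intros HA HQ Hsep A' HA' HA'A u w Hu Hw Huw.
  apply prob_cover_eq0 with Q; auto; [apply partition_meas; auto | intros w' _; apply HQ|].
  intro k. assert (HQk := partition_meas HQ k).
  destruct (proj1 (concat_iff Q Y u) Hu k) as [y [Hy Huy]].
  destruct (proj1 (concat_iff Q Z w) Hw k) as [z [Hz Hwz]].
  apply (Hsep k) with y z; auto; [apply meas_inter; auto | intros w' [h1 h2]; auto|].
  apply eqon_trans with u; [apply eqon_sym, eqon_interr; auto|].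
  apply eqon_trans with w; [apply eqon_interl; auto | apply eqon_interr; auto].
Qed.

Section NoClusterOn.
Variable H : Omega -> Prop.
Hypothesis HmH : meas H.
Hypothesis H_no_cluster :
  forall A, meas A -> (forall w, A w -> H w) -> has_cluster A -> P A = 0.

Lemma agree_exhaustion U W K : stable_set M U -> stable_set M W -> meas K ->
  exists G, meas G /\ (forall w, G w -> K w) /\ (exists u w, U u /\ W w /\ eqon G u w) /\
    separated_on (fun w => K w /\ ~ G w) U W.
Proof.
  intros HU HW HK.
  destruct (maximal_exhaustion PS (fun A => exists u w, U u /\ W w /\ eqon A u w) K HK)
    as [G [HG [HGK [HGa HG0]]]].
  - intros A B HA HB Hs [u [w [h1 [h2 h3]]]]. exists u, w. split; auto. split; auto.
    apply eqon_sub with A; auto.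
  - destruct (stable_ne HU) as [u0 Hu0]. destruct (stable_ne HW) as [w0 Hw0].
    exists u0, w0. split; auto. split; auto. apply eqon_empty.
  - intros D HD Hdis Hn. apply agree_cunion; auto.
  - exists G. split; auto. split; auto. split; auto.
    intros A HA Hs u w Hu Hw Huw. apply HG0; auto. eauto.
Qed.

Definition separating_nbhd_on x A :=
  exists U W, Base U /\ U x /\ BF W /\ separated_on A U W.

Lemma separating_nbhd_on_cunion x D : S x -> (forall n, meas (D n)) -> disjoint D ->
  (forall n, separating_nbhd_on x (D n)) -> separating_nbhd_on x (fun w => exists n, D n w).
Proof.
  intros Sx HD Hdis Hn.
  destruct (choice (fun n (p : (E -> Prop) * (E -> Prop)) =>
    Base (fst p) /\ fst p x /\ BF (snd p) /\ separated_on (D n) (fst p) (snd p))) as [p Hp].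
  { intro n. destruct (Hn n) as [U [W h]]. exists (U, W); auto. }
  destruct (base_cover Sx) as [U0 [HU0 U0x]]. destruct (proj1 HBF_stable) as [W0 HW0].
  exists (disjoint_concat D U0 (fun n => fst (p n))), (disjoint_concat D W0 (fun n => snd (p n))).
  split; [|split; [|split]].
  - apply disjoint_concat_coll; auto. intro n; apply Hp.
  - exists (fun _ => x). split; [intros [|n]; simpl; auto; apply Hp | intro; apply eqon_refl].
  - apply disjoint_concat_coll; auto. intro n; apply Hp.
  - apply separated_on_concat; [apply meas_cunion; auto | apply disjointify_partition; auto|].
    intros [|n]; simpl.
    + intros A' HA' HA'0 u w _ _ _.
      apply prob_sub_eq0 with (fun _ => False); auto using meas_empty, prob_empty.
      intros w' Hw'. destruct (HA'0 w' Hw'); auto.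
    + apply separated_on_sub with (D n); [tauto | apply Hp].
Qed.

Lemma cluster_on_rest x G : S x -> meas G ->
  (forall A, meas A -> (forall w, A w -> H w /\ ~ G w) -> separating_nbhd_on x A -> P A = 0) ->
  cluster_on (fun w => H w /\ ~ G w) x.
Proof.
  intros Sx HG HG0 U HU Ux W HW. set (K := fun w => H w /\ ~ G w).
  assert (HK : meas K) by (apply meas_diff; auto).
  destruct (@agree_exhaustion U W K (proj1 (proj2 HBase_stable) U HU)
    (proj1 (proj2 HBF_stable) W HW) HK)
    as [G' [HG' [HG'K [[u [w [Hu [Hw Huw]]]] Hsep]]]].
  exists u, w. split; auto. split; auto.
  apply eqon_split with G'; auto.
  apply HG0; [apply meas_diff; auto | intros w' [h _]; auto |].
  exists U, W. auto.
Qed.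

Lemma separating_nbhd x : S x -> separating_nbhd_on x H.
Proof.
  intro Sx.
  destruct (maximal_exhaustion PS (separating_nbhd_on x) H HmH) as [G [HG [HGH [HsepG HG0]]]].
  - intros A B HA HB Hs [U [W [h1 [h2 [h3 h4]]]]]. exists U, W.
    split; auto. split; auto. split; auto. apply separated_on_sub with A; auto.
  - destruct (base_cover Sx) as [U0 [HU0 U0x]]. destruct (proj1 HBF_stable) as [W0 HW0].
    exists U0, W0. split; auto. split; auto. split; auto. intros A' HA' HA'0 u w _ _ _.
    apply prob_sub_eq0 with (fun _ => False); auto using meas_empty, prob_empty.
  - intros D HD Hdis Hn. apply separating_nbhd_on_cunion; auto.
  - assert (Hrest : P (fun w => H w /\ ~ G w) = 0).
    { apply H_no_cluster; [apply meas_diff; auto | intros w [h _]; auto |].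
      exists x. split; auto. apply cluster_on_rest; auto. }
    destruct HsepG as [U [W [HU [Ux [HW HsepG]]]]].
    exists U, W. split; auto. split; auto. split; auto.
    intros A HA HAH u w Hu Hw Huw. apply prob_eq0_split with G; auto.
    + apply (HsepG (fun w => A w /\ G w)) with u w; auto; [apply meas_inter; auto | tauto |].
      apply eqon_interl; auto.
    + apply prob_sub_eq0 with (fun w => H w /\ ~ G w); [apply meas_diff | apply meas_diff | |]; auto.
      intros w' [h1 h2]; auto.
Qed.

Definition separating_base U := Base U /\ exists W, BF W /\ separated_on H U W.

Lemma separating_base_coll : stable_coll M separating_base.
Proof.
  split; [|split].
  - destruct (stable_ne HS) as [x0 Sx0].
    destruct (separating_nbhd Sx0) as [U [W [HU [_ [HW Hsep]]]]]. exists U; split; eauto.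
  - intros U [HU _]. apply HBase_stable; auto.
  - intros D Y HD HY.
    destruct (choice (fun k W => BF W /\ separated_on H (Y k) W)) as [W HW]; [intro k; apply HY|].
    split; [apply HBase_stable; auto; intro k; apply HY|].
    exists (concat D W). split; [apply HBF_stable; auto; intro k; apply HW|].
    apply separated_on_concat; auto. intro k. apply separated_on_sub with H; [tauto | apply HW].
Qed.

Lemma separating_base_cover x : S x <-> exists U, separating_base U /\ U x.
Proof.
  split.
  - intro Sx. destruct (separating_nbhd Sx) as [U [W [HU [Ux HW]]]].
    exists U. split; auto. split; auto. exists W; auto.
  - intros [U [[HU _] Ux]]. apply (proj1 HT U); auto. apply HBase; auto.
Qed.

Lemma st_separated_null (X : (E -> Prop) -> Prop) V v w A : meas A -> (forall w, A w -> H w) ->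
  (forall U, X U -> forall A', meas A' -> (forall w, A' w -> H w) ->
     forall u, U u -> eqon A' u w -> P A' = 0) ->
  st M X V -> V v -> eqon A v w -> P A = 0.
Proof.
  intros HA HAH Hsep [B [U [HB [HU ->]]]] Hv Hvw.
  apply prob_cover_eq0 with B; auto; [apply partition_meas; auto | intros w' _; apply HB|].
  intro j. assert (HBj := partition_meas HB j).
  destruct (proj1 (concat_iff B U v) Hv j) as [l [Hl Hvl]].
  apply (Hsep (U j) (HU j)) with l; auto; [apply meas_inter; auto | intros w' [h _]; auto|].
  apply eqon_trans with v; [apply eqon_sym, eqon_interr; auto | apply eqon_interl; auto].
Qed.

Lemma finite_separating_cover_null Ot : stable_finite_sub M separating_base Ot ->
  (forall x, S x <-> exists V, Ot V /\ V x) -> P H = 0.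
Proof.
  intros [A [Ls [HA [HLs HOt]]]] Hcov.
  destruct (choice (fun U W => separating_base U -> BF W /\ separated_on H U W)) as [g Hg].
  { intro U. destruct (classic (separating_base U)) as [[_ [W HW]]|h]; [exists W; auto|].
    destruct (proj1 HBF_stable) as [W HW]. exists W; tauto. }
  assert (Hw : forall k, exists w, S w /\ forall U, In U (map g (Ls k)) -> U w).
  { intro k. apply (proj1 (proj2 HF)), filter_list_inter; auto.
    intros U' HU'. apply in_map_iff in HU'. destruct HU' as [U [<- HU]].
    apply HBF, Hg, (proj2 (HLs k)); auto. }
  destruct (choice _ Hw) as [w Hww].
  destruct (concat_exists w HA) as [z Hz].
  assert (Sz : S z).
  { apply stable_glue with A; auto. intro k; exists (w k); split; [apply (proj1 (Hww k)) | apply Hz]. }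
  destruct (proj1 (Hcov z) Sz) as [V [HV Vz]].
  destruct (proj1 (HOt V) HV) as [Vk [HVk ->]].
  apply prob_cover_eq0 with A; auto; [apply partition_meas; auto | intros w' _; apply HA|].
  intro k. assert (HAk := partition_meas HA k).
  destruct (proj1 (concat_iff A Vk z) Vz k) as [v [Hv Hzv]].
  apply st_separated_null with (fun U => In U (Ls k)) (Vk k) v (w k); auto.
  - apply meas_inter; auto.
  - intros w' [h _]; auto.
  - intros U HU A' HA' HA'H u Hu Huw.
    apply (proj2 (Hg U (proj2 (HLs k) U HU)) A' HA' HA'H u (w k) Hu); auto.
    apply Hww, in_map; auto.
  - apply eqon_trans with z; [apply eqon_sym, eqon_interr; auto|].
    apply eqon_interr; auto. apply Hz.
Qed.
End NoClusterOn.

Lemma finite_subcover_cluster :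
  (forall O, stable_coll M O -> (forall U, O U -> T U) ->
     (forall x, S x <-> exists U, O U /\ U x) ->
     exists Ot, stable_finite_sub M O Ot /\ (forall x, S x <-> exists V, Ot V /\ V x)) ->
  exists x, cluster_point S T F x.
Proof.
  intro HIII.
  destruct cluster_exhaustion as [G [HG [[x [Sx Hx]] HG0]]].
  set (H := fun w => ~ G w).
  assert (HmH : meas H) by (apply meas_compl; auto).
  assert (H_no_cluster : forall A, meas A -> (forall w, A w -> H w) -> has_cluster A -> P A = 0)
    by (intros; apply HG0; auto).
  destruct (HIII _ (@separating_base_coll H HmH H_no_cluster)) as [Ot [HOt Hcov]].
  - intros U [HU _]. apply HBase; auto.
  - apply separating_base_cover; auto.
  - exists x. apply cluster_on_conull with G; auto.
    apply finite_separating_cover_null with Ot; auto.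
Qed.
End FiniteSubcoverToCompact.

Lemma finite_subcover_compact :
  (forall O, stable_coll M O -> (forall U, O U -> T U) ->
     (forall x, S x <-> exists U, O U /\ U x) ->
     exists Ot, stable_finite_sub M O Ot /\ (forall x, S x <-> exists V, Ot V /\ V x)) ->
  stable_compact M S T.
Proof.
  intros HIII F [HF [BF [HBF HBF_stable]]]. apply finite_subcover_cluster with BF; auto.
Qed.
End Topology.
End StableModule.

Unset Implicit Arguments.

Theorem proposition5 (Omega : Type) (PS : ProbSpace Omega) (E : Type)
  (M : L0Module PS E) (HE : stable_module M)
  (S : E -> Prop) (HS : stable_set M S)
  (T : (E -> Prop) -> Prop) (HT : stable_topology M S T) :
  (stable_compact M S T <->
     (forall F, stable_ultrafilter M S F -> exists x, cluster_point S T F x)) /\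
  (stable_compact M S T <->
     (forall O : (E -> Prop) -> Prop, stable_coll M O ->
        (forall U, O U -> T U) ->
        (forall x, S x <-> exists U, O U /\ U x) ->
        exists Ot, stable_finite_sub M O Ot /\
          (forall x, S x <-> exists V, Ot V /\ V x))) /\
  (stable_compact M S T <->
     (forall C : (E -> Prop) -> Prop, stable_coll M C ->
        (forall U, C U -> closed_in S T U) ->
        (forall Ct, stable_finite_sub M C Ct -> exists x, forall V, Ct V -> V x) ->
        exists x, forall V, C V -> V x)).
Proof.
  destruct HT as [HTt [Base [HBase HBase_stable]]].
  split; [|split]; split.
  - intros HK F [HF _]. apply HK; auto.
  - intro HII. eapply ultrafilter_cluster_compact; eauto.
  - intros HK O HO HOT Hcov. eapply compact_finite_subcover; eauto.
  - intro HIII. eapply finite_subcover_compact; eauto.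
  - intros HK C HC HC_closed HC_fip. eapply compact_fip; eauto.
  - intro HIV. eapply fip_compact; eauto.
Qed.
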